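(* Let $k\ge0$ be an integer and $a,b,c,d\in\mathbb{C}$ with $c,\ d+1,\ a+b-d+1\notin\{0,-1,-2,\dots\}$, $d-a+1,d-b+1\notin\{0,-1,-2,\dots\}$, and $\mathrm{Re}(d-a-b-k)>0$. Then $$\begin{aligned} {}_3F_2\!\left(\left.\begin{array}{c}a,\ b,\ c+k+1\\ d+1,\ c\end{array}\right|1\right) &=\frac{(-1)^k\,\Gamma(d+1)\,\Gamma(d-a-b-k)\,(a+b-d+1)_k}{c\,\Gamma(d-a+1)\,\Gamma(d-b+1)}\\ &\quad\times\Bigg\{\big[a(b-c)+c(d-b)\big]\,{}_3F_2\!\left(\left.\begin{array}{c}-k,\ a,\ b\\ c+1,\ a+b-d+1\end{array}\right|1\right)\\ &\qquad+\frac{ab\,(c-d)\,k}{(c+1)(a+b-d+1)}\,{}_3F_2\!\left(\left.\begin{array}{c}1-k,\ a+1,\ b+1\\ c+2,\ a+b-d+2\end{array}\right|1\right)\Bigg\}, \end{aligned}$$ where the two ${}_3F_2$ on the right are terminating (finite) sums (the second term is absent when $k=0$).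
   Context: ${}_3F_2(a_1,a_2,a_3;b_1,b_2;1)=\sum_{m\ge0}\frac{(a_1)_m(a_2)_m(a_3)_m}{m!\,(b_1)_m(b_2)_m}$ with $(\alpha)_m=\Gamma(\alpha+m)/\Gamma(\alpha)$; it converges absolutely if $\mathrm{Re}(b_1+b_2-a_1-a_2-a_3)>0$, and terminates after $m=N$ if some upper parameter equals $-N$ with $N\in\{0,1,2,\dots\}$. *)

From Stdlib Require Import Reals Arith ClassicalEpsilon.
Open Scope R_scope.

Record Cx : Type := mkC { Re : R; Im : R }.

Definition Cx0 : Cx := mkC 0 0.
Definition Cx1 : Cx := mkC 1 0.
Definition RtoC (x : R) : Cx := mkC x 0.
Definition Cnat (n : nat) : Cx := RtoC (INR n).
Definition Cadd (z w : Cx) : Cx := mkC (Re z + Re w) (Im z + Im w).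
Definition Copp (z : Cx) : Cx := mkC (- Re z) (- Im z).
Definition Csub (z w : Cx) : Cx := Cadd z (Copp w).
Definition Cmul (z w : Cx) : Cx :=
  mkC (Re z * Re w - Im z * Im w) (Re z * Im w + Im z * Re w).
Definition Cinv (z : Cx) : Cx :=
  let n := Re z * Re z + Im z * Im z in mkC (Re z / n) (- Im z / n).
Definition Cdiv (z w : Cx) : Cx := Cmul z (Cinv w).

Fixpoint Cpown (z : Cx) (n : nat) : Cx :=
  match n with O => Cx1 | S m => Cmul z (Cpown z m) end.

Definition Cexp (z : Cx) : Cx := mkC (exp (Re z) * cos (Im z)) (exp (Re z) * sin (Im z)).
Definition Rcpow (x : R) (z : Cx) : Cx := Cexp (Cmul z (RtoC (ln x))).

Fixpoint poch (alpha : Cx) (m : nat) : Cx :=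
  match m with O => Cx1 | S j => Cmul (poch alpha j) (Cadd alpha (Cnat j)) end.

Fixpoint Csum (f : nat -> Cx) (n : nat) : Cx :=
  match n with O => Cx0 | S m => Cadd (Csum f m) (f m) end.

Definition Ccv (u : nat -> Cx) (l : Cx) : Prop :=
  Un_cv (fun n => Re (u n)) (Re l) /\ Un_cv (fun n => Im (u n)) (Im l).

(* the limit of a sequence (0 if it does not converge; limits are unique) *)
Definition Clim (u : nat -> Cx) : Cx :=
  match excluded_middle_informative (exists l : Cx, Ccv u l) with
  | left H => proj1_sig (constructive_indefinite_description _ H)
  | right _ => Cx0
  end.

(* Gamma function, via Gauss' product formula
   Gamma z = lim_n n! n^z / (z (z+1) ... (z+n)),  z not in {0,-1,-2,...} *)
Definition Gamma (z : Cx) : Cx :=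
  Clim (fun n => Cdiv (Cmul (Cnat (Factorial.fact n)) (Rcpow (INR n) z)) (poch z (S n))).

Definition F32_term (a1 a2 a3 b1 b2 : Cx) (m : nat) : Cx :=
  Cdiv (Cmul (Cmul (poch a1 m) (poch a2 m)) (poch a3 m))
       (Cmul (Cmul (Cnat (Factorial.fact m)) (poch b1 m)) (poch b2 m)).

Definition F32_partial (a1 a2 a3 b1 b2 : Cx) (N : nat) : Cx :=
  Csum (F32_term a1 a2 a3 b1 b2) N.

Definition F32 (a1 a2 a3 b1 b2 : Cx) : Cx := Clim (F32_partial a1 a2 a3 b1 b2).

Definition notNonPosInt (z : Cx) : Prop := forall n : nat, z <> Copp (Cnat n).

(* Write [D = d + 1] and [F n = 3F2(a, b, c + n; D, c; 1)].  Comparing terms gives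
   [F (n+1) (a,b,c,D) = F n (a,b,c,D) + a b / (D c) * F n (a+1,b+1,c+1,D+1)], and [F 0] is the
   Gauss sum [2F1(a, b; D; 1) = Gamma D Gamma (D-a-b) / (Gamma (D-a) Gamma (D-b))].  The same
   Gamma quotient times the terminating series [3F2(-n, a, b; c, 1+a+b-D; 1)] satisfies the same
   recurrence, by Pascal's rule for [(-n)_j / j!] and [Gamma (z+1) = z Gamma z]; hence the two
   agree for all [n].  For [n = k + 1] a contiguous relation rewrites the terminating series in
   terms of [3F2(-k, a, b; c+1, e; 1)] and [3F2(1-k, a+1, b+1; c+2, e+1; 1)], and
   [Gamma (d+1-a-b) = (d-a-b-k)_(k+1) Gamma (d-a-b-k)] produces the stated prefactor.

   Gauss's theorem is proved along the way.  [Gamma] is the limit of Gauss's product; for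
   [Re z > 0] the logarithms of consecutive ratios of the product are [O(1/n^2)], and
   [Gamma (z+1) = z Gamma z] extends convergence to all [z] that are not in [{0,-1,-2,...}].
   The [2F1] series converges by Raabe's test; telescoping the contiguous relation
   [c (c-a-b) S(c) = (c-a) (c-b) S(c+1)] gives [S(c) = T n * S(c+n)], where [T n] is a quotient of
   Pochhammer symbols tending to the Gamma quotient and [S(c+n)] tends to [1]. *)

From Stdlib Require Import Reals Lra Lia Field ClassicalEpsilon.
From Coquelicot Require Import Hierarchy Derive AutoDerive.
Open Scope R_scope.

Lemma Cx_ext (z w : Cx) : Re z = Re w -> Im z = Im w -> z = w.
Proof. destruct z, w; simpl; intros -> ->; reflexivity. Qed.

Lemma Cx_ring : ring_theory Cx0 Cx1 Cadd Cmul Csub Copp (@eq Cx).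
Proof.
  constructor; intros; apply Cx_ext; unfold Cadd, Cmul, Csub, Copp, Cx0, Cx1; simpl; ring.
Qed.

Lemma Cnorm2_neq0 (z : Cx) : z <> Cx0 -> Re z * Re z + Im z * Im z <> 0.
Proof.
  destruct z as [x y]; simpl; intros Hz E; apply Hz.
  assert (x = 0) by nra; assert (y = 0) by nra; subst; reflexivity.
Qed.

Lemma Cx_field : field_theory Cx0 Cx1 Cadd Cmul Csub Copp Cdiv Cinv (@eq Cx).
Proof.
  constructor.
  - exact Cx_ring.
  - intro E; injection E; lra.
  - reflexivity.
  - intros z Hz; apply Cnorm2_neq0 in Hz; destruct z as [x y]; simpl in *.
    apply Cx_ext; unfold Cmul, Cinv, Cx1; simpl; field; exact Hz.
Qed.

Add Field Cx_field : Cx_field.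

Lemma Cnat_0 : Cnat 0 = Cx0.
Proof. apply Cx_ext; simpl; ring. Qed.

Lemma Cnat_S (n : nat) : Cnat (S n) = Cadd (Cnat n) Cx1.
Proof. apply Cx_ext; unfold Cnat, RtoC, Cadd, Cx1; cbn [Re Im]; [rewrite S_INR|]; ring. Qed.

Lemma Cnat_add (n m : nat) : Cnat (n + m) = Cadd (Cnat n) (Cnat m).
Proof. apply Cx_ext; unfold Cnat, RtoC, Cadd; cbn [Re Im]; [rewrite plus_INR|]; ring. Qed.

Lemma Cnat_mul (n m : nat) : Cnat (n * m) = Cmul (Cnat n) (Cnat m).
Proof. apply Cx_ext; unfold Cnat, RtoC, Cmul; cbn [Re Im]; [rewrite mult_INR|]; ring. Qed.

Lemma Cnat_fact_S (n : nat) :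
  Cnat (Factorial.fact (S n)) = Cmul (Cnat (S n)) (Cnat (Factorial.fact n)).
Proof. exact (Cnat_mul (S n) _). Qed.

Lemma RtoC_2 : RtoC 2 = Cadd Cx1 Cx1.
Proof. apply Cx_ext; simpl; ring. Qed.

Lemma Cx1_neq0 : Cx1 <> Cx0.
Proof. intro E; injection E; lra. Qed.

Lemma Cmul_neq0 (z w : Cx) : z <> Cx0 -> w <> Cx0 -> Cmul z w <> Cx0.
Proof.
  intros Hz Hw E; apply Hw.
  replace w with (Cmul (Cinv z) (Cmul z w)) by (field; exact Hz).
  rewrite E; ring.
Qed.

Lemma Cdiv_neq0 (z w : Cx) : z <> Cx0 -> w <> Cx0 -> Cdiv z w <> Cx0.
Proof.
  intros Hz Hw E; apply Hz.
  replace z with (Cmul (Cdiv z w) w) by (field; exact Hw).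
  rewrite E; ring.
Qed.

Lemma Cmul_neq0_l (z w : Cx) : Cmul z w <> Cx0 -> z <> Cx0.
Proof. intros H E; apply H; rewrite E; ring. Qed.

Lemma Cmul_neq0_r (z w : Cx) : Cmul z w <> Cx0 -> w <> Cx0.
Proof. intros H E; apply H; rewrite E; ring. Qed.

Lemma Cnat_neq0 (n : nat) : (0 < n)%nat -> Cnat n <> Cx0.
Proof. intros Hn E; apply (f_equal Re) in E; apply lt_0_INR in Hn; cbn in E; lra. Qed.

Lemma Cnat_fact_neq0 (n : nat) : Cnat (Factorial.fact n) <> Cx0.
Proof. apply Cnat_neq0, Factorial.lt_O_fact. Qed.

Lemma poch_S (x : Cx) (m : nat) : poch x (S m) = Cmul (poch x m) (Cadd x (Cnat m)).
Proof. reflexivity. Qed.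

Lemma poch_Sl (x : Cx) (m : nat) : poch x (S m) = Cmul x (poch (Cadd x Cx1) m).
Proof.
  induction m as [|m IH].
  - simpl; rewrite Cnat_0; ring.
  - rewrite poch_S, IH, poch_S, Cnat_S; ring.
Qed.

Lemma poch_opp_Cnat (n m : nat) : (n < m)%nat -> poch (Copp (Cnat n)) m = Cx0.
Proof.
  induction m as [|m IH]; intro Hm; [lia|].
  rewrite poch_S; destruct (Nat.eq_dec n m) as [->|Hnm].
  - replace (Cadd (Copp (Cnat m)) (Cnat m)) with Cx0 by ring; ring.
  - rewrite IH by lia; ring.
Qed.

Lemma poch_neq0_le (x : Cx) (n m : nat) : poch x n <> Cx0 -> (m <= n)%nat -> poch x m <> Cx0.
Proof.
  intros Hx Hm; induction Hm as [|n Hm IH]; [exact Hx|].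
  apply IH; rewrite poch_S in Hx; exact (Cmul_neq0_l _ _ Hx).
Qed.

Lemma poch_S_neq0 (x : Cx) (j : nat) : poch x (S j) <> Cx0 ->
  x <> Cx0 /\ poch (Cadd x Cx1) j <> Cx0 /\ poch x j <> Cx0 /\ Cadd x (Cnat j) <> Cx0.
Proof.
  intro H; pose proof H as H'; rewrite poch_Sl in H; rewrite poch_S in H'.
  repeat split; eauto using Cmul_neq0_l, Cmul_neq0_r.
Qed.

Lemma poch_neq0_Re (x : Cx) (n : nat) : Re x < - INR n -> poch x (S n) <> Cx0.
Proof.
  induction n as [|n IH]; intro Hx; rewrite poch_S; apply Cmul_neq0.
  - exact Cx1_neq0.
  - intro E; apply (f_equal Re) in E; cbn in E, Hx; lra.
  - apply IH; rewrite S_INR in Hx; lra.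
  - intro E; apply (f_equal Re) in E; cbn [Re Cadd Cnat RtoC Cx0] in E; lra.
Qed.

Lemma notNonPosInt_S (x : Cx) : notNonPosInt x -> notNonPosInt (Cadd x Cx1).
Proof.
  intros Hx n E; apply (Hx (S n)); rewrite Cnat_S.
  replace x with (Csub (Cadd x Cx1) Cx1) by ring; rewrite E; ring.
Qed.

Lemma add_Cnat_neq0 (x : Cx) (n : nat) : notNonPosInt x -> Cadd x (Cnat n) <> Cx0.
Proof.
  intros Hx E; apply (Hx n).
  replace x with (Csub (Cadd x (Cnat n)) (Cnat n)) by ring; rewrite E; ring.
Qed.

Lemma notNonPosInt_neq0 (x : Cx) : notNonPosInt x -> x <> Cx0.
Proof.
  intro Hx; replace x with (Cadd x (Cnat 0)) by (apply Cx_ext; simpl; ring).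
  exact (add_Cnat_neq0 x 0 Hx).
Qed.

Lemma notNonPosInt_add_Cnat (x : Cx) (n : nat) :
  notNonPosInt x -> notNonPosInt (Cadd x (Cnat n)).
Proof.
  intro Hx; induction n as [|n IH].
  - replace (Cadd x (Cnat 0)) with x by (apply Cx_ext; simpl; ring); exact Hx.
  - rewrite Cnat_S; replace (Cadd x (Cadd (Cnat n) Cx1)) with (Cadd (Cadd x (Cnat n)) Cx1) by ring.
    apply notNonPosInt_S, IH.
Qed.

Lemma notNonPosInt_Re_pos (x : Cx) : 0 < Re x -> notNonPosInt x.
Proof.
  intros Hx n E; apply (f_equal Re) in E; simpl in E.
  pose proof (pos_INR n); lra.
Qed.

Lemma poch_neq0 (x : Cx) (m : nat) : notNonPosInt x -> poch x m <> Cx0.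
Proof.
  intro Hx; induction m as [|m IH]; [exact Cx1_neq0|].
  rewrite poch_S; apply Cmul_neq0; [exact IH | apply add_Cnat_neq0, Hx].
Qed.

Lemma Csum_ext (f g : nat -> Cx) (N : nat) :
  (forall j, (j < N)%nat -> f j = g j) -> Csum f N = Csum g N.
Proof.
  induction N as [|N IH]; intro H; simpl; [reflexivity|].
  rewrite IH, H; [reflexivity | lia | intros; apply H; lia].
Qed.

Lemma Csum_Sl (f : nat -> Cx) (N : nat) :
  Csum f (S N) = Cadd (f 0%nat) (Csum (fun j => f (S j)) N).
Proof. induction N as [|N IH]; simpl in *; [ring | rewrite IH; ring]. Qed.

Lemma Csum_add (f g : nat -> Cx) (N : nat) :
  Csum (fun j => Cadd (f j) (g j)) N = Cadd (Csum f N) (Csum g N).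
Proof. induction N as [|N IH]; simpl; [ring | rewrite IH; ring]. Qed.

Lemma Csum_sub (f g : nat -> Cx) (N : nat) :
  Csum (fun j => Csub (f j) (g j)) N = Csub (Csum f N) (Csum g N).
Proof. induction N as [|N IH]; simpl; [ring | rewrite IH; ring]. Qed.

Lemma Csum_mull (c : Cx) (f : nat -> Cx) (N : nat) :
  Csum (fun j => Cmul c (f j)) N = Cmul c (Csum f N).
Proof. induction N as [|N IH]; simpl; [ring | rewrite IH; ring]. Qed.

Lemma Csum_telescope (g : nat -> Cx) (N : nat) :
  Csum (fun m => Csub (g m) (g (S m))) N = Csub (g 0%nat) (g N).
Proof. induction N as [|N IH]; simpl; [ring | rewrite IH; ring]. Qed.

Lemma Csum_eq0_from (f : nat -> Cx) (N M : nat) :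
  (forall j, (N <= j)%nat -> f j = Cx0) -> (N <= M)%nat -> Csum f M = Csum f N.
Proof.
  intros Hf HM; induction HM as [|M HM IH]; [reflexivity|].
  simpl; rewrite IH, Hf by lia; ring.
Qed.

Ltac poch_facts H := let a := fresh in let b := fresh in let c := fresh in let d := fresh in
  destruct (poch_S_neq0 _ _ H) as (a & b & c & d).

(** * Terminating [3F2] series *)

Definition F32_fin (n : nat) (a b c f : Cx) : Cx :=
  F32_partial (Copp (Cnat n)) a b c f (S n).

Lemma F32_term_0 (a1 a2 a3 b1 b2 : Cx) : F32_term a1 a2 a3 b1 b2 0 = Cx1.
Proof.
  unfold F32_term; simpl poch.
  replace (Cnat (Factorial.fact 0)) with Cx1 by (apply Cx_ext; simpl; ring).
  field; exact Cx1_neq0.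
Qed.

Lemma F32_fin_0 (a b c f : Cx) : F32_fin 0 a b c f = Cx1.
Proof. unfold F32_fin, F32_partial; simpl Csum; rewrite F32_term_0; ring. Qed.

Lemma F32_term_S (a1 a2 a3 b1 b2 : Cx) (j : nat) :
  poch b1 (S j) <> Cx0 -> poch b2 (S j) <> Cx0 ->
  F32_term a1 a2 a3 b1 b2 (S j) =
  Cmul (Cdiv (Cmul (Cmul a1 a2) a3) (Cmul (Cmul (Cnat (S j)) b1) b2))
       (F32_term (Cadd a1 Cx1) (Cadd a2 Cx1) (Cadd a3 Cx1) (Cadd b1 Cx1) (Cadd b2 Cx1) j).
Proof.
  intros H1 H2; poch_facts H1; poch_facts H2.
  pose proof (Cnat_fact_neq0 j); pose proof (Cnat_neq0 (S j) (Nat.lt_0_succ j)).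
  unfold F32_term; rewrite !poch_Sl, Cnat_fact_S; field; repeat split; auto.
Qed.

Lemma F32_term_pred_S (a1 a b c f : Cx) (j : nat) :
  poch c (S j) <> Cx0 -> poch f (S j) <> Cx0 ->
  F32_term (Csub a1 Cx1) a b c f (S j) =
  Csub (F32_term a1 a b c f (S j))
       (Cmul (Cdiv (Cmul a b) (Cmul c f))
             (F32_term a1 (Cadd a Cx1) (Cadd b Cx1) (Cadd c Cx1) (Cadd f Cx1) j)).
Proof.
  intros Hc Hf; poch_facts Hc; poch_facts Hf.
  pose proof (Cnat_fact_neq0 j); pose proof (Cnat_neq0 (S j) (Nat.lt_0_succ j)).
  unfold F32_term; rewrite (poch_Sl (Csub a1 Cx1)), (poch_S a1), !(poch_Sl a), !(poch_Sl b),
    !(poch_Sl c), !(poch_Sl f), Cnat_fact_S, Cnat_S.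
  replace (Cadd (Csub a1 Cx1) Cx1) with a1 by ring.
  rewrite Cnat_S in *; field; repeat split; auto.
Qed.

Lemma F32_term_contiguous (a1 a b c f : Cx) (j : nat) :
  poch c (S j) <> Cx0 -> poch f (S j) <> Cx0 ->
  Csub (F32_term a1 a b c f j)
       (Cmul (Cdiv (Cmul a b) (Cmul c f))
             (F32_term a1 (Cadd a Cx1) (Cadd b Cx1) (Cadd c Cx1) (Cadd f Cx1) j)) =
  Cmul (Cdiv (Cadd (Csub (Cmul c f) (Cmul a b)) (Cmul (Cnat j) (Csub (Cadd c f) (Cadd a b))))
             (Cmul c f))
       (F32_term a1 a b (Cadd c Cx1) (Cadd f Cx1) j).
Proof.
  intros Hc Hf; poch_facts Hc; poch_facts Hf; pose proof (Cnat_fact_neq0 j).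
  assert (Ec : poch (Cadd c Cx1) j = Cdiv (Cmul (poch c j) (Cadd c (Cnat j))) c)
    by (rewrite <- poch_S, poch_Sl; field; auto).
  assert (Ef : poch (Cadd f Cx1) j = Cdiv (Cmul (poch f j) (Cadd f (Cnat j))) f)
    by (rewrite <- poch_S, poch_Sl; field; auto).
  assert (Eab : Cmul (Cdiv (Cmul a b) (Cmul c f))
                  (F32_term a1 (Cadd a Cx1) (Cadd b Cx1) (Cadd c Cx1) (Cadd f Cx1) j) =
                Cdiv (Cmul (Cmul (poch a1 j) (Cmul a (poch (Cadd a Cx1) j)))
                           (Cmul b (poch (Cadd b Cx1) j)))
                     (Cmul (Cmul (Cmul (Cnat (Factorial.fact j)) (poch (Cadd c Cx1) j))
                                 (poch (Cadd f Cx1) j)) (Cmul c f)))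
    by (unfold F32_term; field; repeat split; auto).
  rewrite Eab, <- !poch_Sl, !poch_S; unfold F32_term; rewrite Ec, Ef.
  field; repeat split; auto.
Qed.

Lemma F32_term_opp_Cnat_eq0 (n : nat) (a b c f : Cx) (j : nat) :
  (n < j)%nat -> F32_term (Copp (Cnat n)) a b c f j = Cx0.
Proof. intro Hj; unfold F32_term, Cdiv; rewrite poch_opp_Cnat by exact Hj; ring. Qed.

Lemma F32_partial_opp_Cnat (n : nat) (a b c f : Cx) (N : nat) :
  (S n <= N)%nat -> F32_partial (Copp (Cnat n)) a b c f N = F32_fin n a b c f.
Proof.
  intro HN; apply Csum_eq0_from; [|exact HN].
  intros j Hj; apply F32_term_opp_Cnat_eq0; lia.
Qed.

Lemma Csum_mul_index_F32_term (a1 a2 a3 b1 b2 : Cx) (k : nat) :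
  poch b1 k <> Cx0 -> poch b2 k <> Cx0 ->
  Csum (fun j => Cmul (Cnat j) (F32_term a1 a2 a3 b1 b2 j)) (S k) =
  Cmul (Cdiv (Cmul (Cmul a1 a2) a3) (Cmul b1 b2))
       (Csum (F32_term (Cadd a1 Cx1) (Cadd a2 Cx1) (Cadd a3 Cx1) (Cadd b1 Cx1) (Cadd b2 Cx1)) k).
Proof.
  intros H1 H2; rewrite Csum_Sl, <- Csum_mull.
  replace (Cmul (Cnat 0) (F32_term a1 a2 a3 b1 b2 0)) with Cx0 by (apply Cx_ext; simpl; ring).
  rewrite Csum_ext with (g := fun i => Cmul (Cdiv (Cmul (Cmul a1 a2) a3) (Cmul b1 b2))
      (F32_term (Cadd a1 Cx1) (Cadd a2 Cx1) (Cadd a3 Cx1) (Cadd b1 Cx1) (Cadd b2 Cx1) i)).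
  { ring. }
  intros i Hi.
  assert (P1 : poch b1 (S i) <> Cx0) by (apply (poch_neq0_le b1 k); [exact H1 | lia]).
  assert (P2 : poch b2 (S i) <> Cx0) by (apply (poch_neq0_le b2 k); [exact H2 | lia]).
  rewrite F32_term_S by assumption.
  poch_facts P1; poch_facts P2; pose proof (Cnat_neq0 (S i) (Nat.lt_0_succ i)).
  field; repeat split; auto.
Qed.

Lemma F32_fin_S (n : nat) (a b c f : Cx) :
  poch c (S n) <> Cx0 -> poch f (S n) <> Cx0 ->
  F32_fin (S n) a b c f =
  Csub (F32_fin n a b c f)
       (Cmul (Cdiv (Cmul a b) (Cmul c f)) (F32_fin n (Cadd a Cx1) (Cadd b Cx1) (Cadd c Cx1) (Cadd f Cx1))).
Proof.
  intros Hc Hf.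
  rewrite <- (F32_partial_opp_Cnat n a b c f (S (S n))) by lia.
  unfold F32_fin, F32_partial; rewrite !(Csum_Sl _ (S n)), !F32_term_0, <- Csum_mull.
  rewrite (Csum_ext (fun j => F32_term (Copp (Cnat (S n))) a b c f (S j))
    (fun j => Csub (F32_term (Copp (Cnat n)) a b c f (S j))
       (Cmul (Cdiv (Cmul a b) (Cmul c f))
             (F32_term (Copp (Cnat n)) (Cadd a Cx1) (Cadd b Cx1) (Cadd c Cx1) (Cadd f Cx1) j)))).
  { rewrite Csum_sub; ring. }
  intros j Hj; replace (Copp (Cnat (S n))) with (Csub (Copp (Cnat n)) Cx1) by (rewrite Cnat_S; ring).
  apply F32_term_pred_S; apply (poch_neq0_le _ (S n)); auto; lia.
Qed.

Lemma F32_fin_contiguous (k : nat) (a b c f : Cx) :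
  poch c (S k) <> Cx0 -> poch f (S k) <> Cx0 ->
  F32_fin (S k) a b c f =
  Csub (Cmul (Cdiv (Csub (Cmul c f) (Cmul a b)) (Cmul c f)) (F32_fin k a b (Cadd c Cx1) (Cadd f Cx1)))
       (Cmul (Cdiv (Cmul (Cmul (Cmul a b) (Csub (Cadd c f) (Cadd a b))) (Cnat k))
                   (Cmul (Cmul (Cmul c f) (Cadd c Cx1)) (Cadd f Cx1)))
             (F32_partial (Csub Cx1 (Cnat k)) (Cadd a Cx1) (Cadd b Cx1) (Cadd c (RtoC 2))
                          (Cadd f (RtoC 2)) k)).
Proof.
  intros Hc Hf.
  destruct (poch_S_neq0 c k Hc) as (c0 & Pc1 & _); destruct (poch_S_neq0 f k Hf) as (f0 & Pf1 & _).
  rewrite F32_fin_S by assumption; unfold F32_fin, F32_partial.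
  rewrite <- Csum_mull, <- Csum_sub.
  rewrite (Csum_ext _ (fun j => Cadd
      (Cmul (Cdiv (Csub (Cmul c f) (Cmul a b)) (Cmul c f))
            (F32_term (Copp (Cnat k)) a b (Cadd c Cx1) (Cadd f Cx1) j))
      (Cmul (Cdiv (Csub (Cadd c f) (Cadd a b)) (Cmul c f))
            (Cmul (Cnat j) (F32_term (Copp (Cnat k)) a b (Cadd c Cx1) (Cadd f Cx1) j))))).
  2:{ intros j Hj; rewrite F32_term_contiguous by (apply (poch_neq0_le _ (S k)); auto; lia).
      field; split; auto. }
  rewrite Csum_add, !Csum_mull, Csum_mul_index_F32_term by assumption.
  replace (Cadd (Copp (Cnat k)) Cx1) with (Csub Cx1 (Cnat k)) by ring.
  replace (Cadd (Cadd c Cx1) Cx1) with (Cadd c (RtoC 2)) by (rewrite RtoC_2; ring).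
  replace (Cadd (Cadd f Cx1) Cx1) with (Cadd f (RtoC 2)) by (rewrite RtoC_2; ring).
  destruct k as [|k].
  - simpl Csum; unfold Cdiv; ring.
  - destruct (poch_S_neq0 _ _ Pc1) as (c1 & _); destruct (poch_S_neq0 _ _ Pf1) as (f1 & _).
    field; repeat split; auto.
Qed.

(** * Limits and series *)

Lemma eventually_INR_ge (T : R) : eventually (fun n => T <= INR n).
Proof.
  destruct (INR_unbounded T) as [N HN]; exists N; intros n Hn.
  apply le_INR in Hn; lra.
Qed.

Lemma Un_cv_const (c : R) : Un_cv (fun _ => c) c.
Proof. intros eps He; exists 0%nat; intros; unfold Rdist; rewrite Rminus_diag, Rabs_R0; lra. Qed.

Lemma Un_cv_eventually_ext (u v : nat -> R) (l : R) :
  eventually (fun n => u n = v n) -> Un_cv u l -> Un_cv v l.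
Proof.
  intros [N HN] H eps He; destruct (H eps He) as [M HM]; exists (max N M); intros n Hn.
  rewrite <- HN by lia; apply HM; lia.
Qed.

Lemma Un_cv_S (u : nat -> R) (l : R) : Un_cv u l -> Un_cv (fun n => u (S n)) l.
Proof. intros H eps He; destruct (H eps He) as [N HN]; exists N; intros n Hn; apply HN; lia. Qed.

Lemma Un_cv_of_S (u : nat -> R) (l : R) : Un_cv (fun n => u (S n)) l -> Un_cv u l.
Proof.
  intros H eps He; destruct (H eps He) as [N HN]; exists (S N); intros [|n] Hn; [lia|].
  apply HN; lia.
Qed.

Lemma Un_cv_inv (u : nat -> R) (l : R) : l <> 0 -> Un_cv u l -> Un_cv (fun n => / u n) (/ l).
Proof.
  intros Hl H; apply (continuity_seq Rinv u l); [|exact H].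
  apply (continuity_pt_inv (fun x => x) l); [|exact Hl].
  apply derivable_continuous_pt, derivable_pt_id.
Qed.

Lemma Un_cv_le (u : nat -> R) (l B : R) : Un_cv u l -> eventually (fun n => u n <= B) -> l <= B.
Proof.
  intros H [N HN]; destruct (Rle_dec l B) as [|Hlt]; [assumption|exfalso].
  destruct (H (l - B)) as [M HM]; [lra|].
  specialize (HM (max N M) ltac:(lia)); specialize (HN (max N M) ltac:(lia)).
  unfold Rdist in HM; apply Rabs_def2 in HM; lra.
Qed.

Lemma Un_cv_squeeze0 (u v : nat -> R) :
  Un_cv v 0 -> eventually (fun n => Rabs (u n) <= v n) -> Un_cv u 0.
Proof.
  intros H [N HN] eps He; destruct (H eps He) as [M HM]; exists (max N M); intros n Hn.
  specialize (HM n ltac:(lia)); specialize (HN n ltac:(lia)); unfold Rdist in *.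
  rewrite Rminus_0_r in *; apply Rabs_def2 in HM; pose proof (Rabs_pos (u n)); lra.
Qed.

Lemma Un_cv_inv_INR : Un_cv (fun n => / INR n) 0.
Proof.
  intros eps He; destruct (INR_unbounded (/ eps)) as [N HN]; exists (S N); intros n Hn.
  unfold Rdist; rewrite Rminus_0_r.
  assert (INR N < INR n) by (apply lt_INR; lia).
  assert (0 < / eps) by (apply Rinv_0_lt_compat; lra).
  rewrite Rabs_pos_eq by (apply Rlt_le, Rinv_0_lt_compat; lra).
  replace eps with (/ / eps) by (field; lra); apply Rinv_lt_contravar; nra.
Qed.

Lemma Un_cv_div_add_INR (c r : R) : Un_cv (fun n => c / (r + INR n)) 0.
Proof.
  apply (Un_cv_eventually_ext (fun n => c * / INR n * / (1 + r * / INR n))).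
  { apply (filter_imp (fun n => Rabs r + 1 <= INR n)); [|apply eventually_INR_ge].
    intros n Hn; pose proof (Rle_abs r); pose proof (Rle_abs (- r)); rewrite Rabs_Ropp in *.
    field; split; lra. }
  replace 0 with (c * 0 * / (1 + r * 0)) by (field; lra).
  apply CV_mult; [apply CV_mult; [apply Un_cv_const | apply Un_cv_inv_INR]|].
  apply Un_cv_inv; [lra|].
  apply CV_plus; [apply Un_cv_const | apply CV_mult; [apply Un_cv_const | apply Un_cv_inv_INR]].
Qed.

Lemma Ccv_eventually_ext (u v : nat -> Cx) (l : Cx) :
  eventually (fun n => u n = v n) -> Ccv u l -> Ccv v l.
Proof.
  intros H [H1 H2]; split; eapply Un_cv_eventually_ext; eauto;
    apply (filter_imp _ _ (fun n E => f_equal _ E) H).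
Qed.

Lemma Ccv_ext (u v : nat -> Cx) (l : Cx) : (forall n, u n = v n) -> Ccv u l -> Ccv v l.
Proof. intro H; apply Ccv_eventually_ext, filter_forall, H. Qed.

Lemma Ccv_const (c : Cx) : Ccv (fun _ => c) c.
Proof. split; apply Un_cv_const. Qed.

Lemma Ccv_eventually_const (u : nat -> Cx) (c : Cx) :
  eventually (fun n => u n = c) -> Ccv u c.
Proof.
  intro H; apply (Ccv_eventually_ext (fun _ => c)); [|apply Ccv_const].
  apply (filter_imp _ _ (fun n E => eq_sym E) H).
Qed.

Lemma Ccv_add (u v : nat -> Cx) (l1 l2 : Cx) :
  Ccv u l1 -> Ccv v l2 -> Ccv (fun n => Cadd (u n) (v n)) (Cadd l1 l2).
Proof. intros [A1 A2] [B1 B2]; split; simpl; apply CV_plus; assumption. Qed.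

Lemma Ccv_opp (u : nat -> Cx) (l : Cx) : Ccv u l -> Ccv (fun n => Copp (u n)) (Copp l).
Proof. intros [A1 A2]; split; simpl; apply CV_opp; assumption. Qed.

Lemma Ccv_sub (u v : nat -> Cx) (l1 l2 : Cx) :
  Ccv u l1 -> Ccv v l2 -> Ccv (fun n => Csub (u n) (v n)) (Csub l1 l2).
Proof. intros; apply Ccv_add; [|apply Ccv_opp]; assumption. Qed.

Lemma Ccv_mul (u v : nat -> Cx) (l1 l2 : Cx) :
  Ccv u l1 -> Ccv v l2 -> Ccv (fun n => Cmul (u n) (v n)) (Cmul l1 l2).
Proof.
  intros [A1 A2] [B1 B2]; split; simpl.
  - apply CV_minus; apply CV_mult; assumption.
  - apply CV_plus; apply CV_mult; assumption.
Qed.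

Lemma Ccv_inv (u : nat -> Cx) (l : Cx) : l <> Cx0 -> Ccv u l -> Ccv (fun n => Cinv (u n)) (Cinv l).
Proof.
  intros Hl [A1 A2].
  assert (N : Un_cv (fun n => Re (u n) * Re (u n) + Im (u n) * Im (u n))
                    (Re l * Re l + Im l * Im l)) by (apply CV_plus; apply CV_mult; assumption).
  pose proof (Un_cv_inv _ _ (Cnorm2_neq0 l Hl) N) as I.
  split; simpl; unfold Rdiv; apply CV_mult; try assumption; apply CV_opp; assumption.
Qed.

Lemma Ccv_div (u v : nat -> Cx) (l1 l2 : Cx) :
  l2 <> Cx0 -> Ccv u l1 -> Ccv v l2 -> Ccv (fun n => Cdiv (u n) (v n)) (Cdiv l1 l2).
Proof. intros; apply Ccv_mul; [|apply Ccv_inv]; assumption. Qed.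

Lemma Ccv_unique (u : nat -> Cx) (l1 l2 : Cx) : Ccv u l1 -> Ccv u l2 -> l1 = l2.
Proof. intros [A1 A2] [B1 B2]; apply Cx_ext; eapply UL_sequence; eauto. Qed.

Lemma Clim_eq (u : nat -> Cx) (l : Cx) : Ccv u l -> Clim u = l.
Proof.
  intro H; unfold Clim; destruct (excluded_middle_informative _) as [E|E].
  - destruct (constructive_indefinite_description _ E) as [l' Hl']; simpl.
    eapply Ccv_unique; eauto.
  - exfalso; apply E; exists l; exact H.
Qed.

Lemma Ccv_S (u : nat -> Cx) (l : Cx) : Ccv u l -> Ccv (fun n => u (S n)) l.
Proof. intros [A B]; split; apply (Un_cv_S (fun n => _ (u n))); assumption. Qed.

Lemma Ccv_of_S (u : nat -> Cx) (l : Cx) : Ccv (fun n => u (S n)) l -> Ccv u l.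
Proof. intros [A B]; split; apply Un_cv_of_S; assumption. Qed.

Lemma Ccv_div_Cnat (c : Cx) : Ccv (fun n => Cmul c (Cinv (Cnat n))) Cx0.
Proof.
  replace Cx0 with (Cmul c Cx0) by ring; apply Ccv_mul; [apply Ccv_const|].
  apply (Ccv_eventually_ext (fun n => RtoC (/ INR n))).
  - exists 1%nat; intros n Hn; assert (0 < INR n) by (apply lt_0_INR; lia).
    apply Cx_ext; unfold Cinv, Cnat, RtoC; cbn [Re Im]; field; lra.
  - split; cbn [Re Im RtoC Cx0]; [apply Un_cv_inv_INR | apply Un_cv_const].
Qed.

Fixpoint rsum (f : nat -> R) (n : nat) : R :=
  match n with O => 0 | S m => rsum f m + f m end.

Lemma rsum_le (f g : nat -> R) (N : nat) : (forall j, f j <= g j) -> rsum f N <= rsum g N.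
Proof. intro H; induction N; simpl; [lra|]; specialize (H N); lra. Qed.

Lemma rsum_ge0 (f : nat -> R) (N : nat) : (forall j, 0 <= f j) -> 0 <= rsum f N.
Proof. intro H; induction N; simpl; [lra|]; specialize (H N); lra. Qed.

Lemma rsum_le_mono (f : nat -> R) (N M : nat) :
  (forall j, 0 <= f j) -> (N <= M)%nat -> rsum f N <= rsum f M.
Proof. intros H HM; induction HM; simpl; [lra|]; specialize (H m); lra. Qed.

Lemma rsum_Sl (f : nat -> R) (N : nat) : rsum f (S N) = f 0%nat + rsum (fun j => f (S j)) N.
Proof.
  induction N as [|N IH]; [simpl; ring|].
  change (rsum f (S (S N))) with (rsum f (S N) + f (S N)); rewrite IH; simpl; ring.
Qed.

Lemma rsum_mulr (f : nat -> R) (c : R) (N : nat) : rsum (fun j => f j * c) N = rsum f N * c.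
Proof. induction N as [|N IH]; simpl; [ring | rewrite IH; ring]. Qed.

Lemma Rabs_rsum_le (f : nat -> R) (N : nat) : Rabs (rsum f N) <= rsum (fun j => Rabs (f j)) N.
Proof.
  induction N as [|N IH]; simpl; [rewrite Rabs_R0; lra|].
  eapply Rle_trans; [apply Rabs_triang | lra].
Qed.

Lemma Rabs_rsum_sub_le (f : nat -> R) (N M : nat) : (N <= M)%nat ->
  Rabs (rsum f M - rsum f N) <= rsum (fun j => Rabs (f j)) M - rsum (fun j => Rabs (f j)) N.
Proof.
  intro HM; induction HM as [|M HM IH]; simpl; [rewrite Rminus_diag, Rabs_R0; lra|].
  replace (rsum f M + f M - rsum f N) with ((rsum f M - rsum f N) + f M) by ring.
  eapply Rle_trans; [apply Rabs_triang | lra].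
Qed.

Lemma rsum_cv_abs_bounded (f : nat -> R) (B : R) :
  (forall N, rsum (fun j => Rabs (f j)) N <= B) -> { l | Un_cv (rsum f) l }.
Proof.
  intro HB; apply Rcomplete.R_complete.
  destruct (growing_cv (rsum (fun j => Rabs (f j)))) as [L HL].
  - intro n; simpl; pose proof (Rabs_pos (f n)); lra.
  - exists B; intros x [n ->]; apply HB.
  - intros eps He; destruct (CV_Cauchy _ (exist _ L HL) eps He) as [N HN]; exists N.
    intros n m Hn Hm; unfold Rdist in *.
    destruct (Nat.le_gt_cases n m) as [Hnm|Hnm]; [rewrite Rabs_minus_sym|].
    + eapply Rle_lt_trans; [apply Rabs_rsum_sub_le, Hnm|].
      eapply Rle_lt_trans; [apply Rle_abs | exact (HN m n Hm Hn)].
    + eapply Rle_lt_trans; [apply Rabs_rsum_sub_le; lia|].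
      eapply Rle_lt_trans; [apply Rle_abs | exact (HN n m Hn Hm)].
Qed.

Lemma rsum_inv_sq_le (N : nat) :
  rsum (fun j => / (INR (S j) * INR (S j))) (S N) <= 2 - / INR (S N).
Proof.
  induction N as [|N IH]; [simpl; lra|].
  change (rsum (fun j => / (INR (S j) * INR (S j))) (S (S N))) with
    (rsum (fun j => / (INR (S j) * INR (S j))) (S N) + / (INR (S (S N)) * INR (S (S N)))).
  rewrite (S_INR (S N)); assert (1 <= INR (S N)) by (apply (le_INR 1); lia).
  assert (/ ((INR (S N) + 1) * (INR (S N) + 1)) <= / INR (S N) - / (INR (S N) + 1)); [|lra].
  replace (/ INR (S N) - / (INR (S N) + 1)) with (/ (INR (S N) * (INR (S N) + 1))) by (field; lra).
  apply Rinv_le_contravar; nra.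
Qed.

Lemma rsum_abs_le_from (f g : nat -> R) (N0 N : nat) :
  (forall j, 0 <= g j) -> (forall j, (N0 <= j)%nat -> Rabs (f j) <= g j) ->
  rsum (fun j => Rabs (f j)) N <= rsum (fun j => Rabs (f j)) N0 + rsum g N.
Proof.
  intros Hg Hfg; induction N as [|N IH]; simpl.
  - apply Rplus_le_le_0_compat; [apply rsum_ge0; intro; apply Rabs_pos | lra].
  - destruct (Nat.lt_ge_cases N N0) as [HN|HN].
    + pose proof (rsum_le_mono (fun j => Rabs (f j)) (S N) N0 (fun j => Rabs_pos _) HN).
      pose proof (rsum_ge0 g N Hg); simpl in *; specialize (Hg N); lra.
    + specialize (Hfg N HN); lra.
Qed.

Lemma rsum_cv_inv_sq (f : nat -> R) (C : R) :
  eventually (fun n => Rabs (f n) <= C / (INR (S n) * INR (S n))) -> exists l, Un_cv (rsum f) l.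
Proof.
  intros [N0 HN0].
  assert (Hpos : forall j, 0 < / (INR (S j) * INR (S j)))
    by (intro j; apply Rinv_0_lt_compat, Rmult_lt_0_compat; apply lt_0_INR; lia).
  set (g := fun j => / (INR (S j) * INR (S j)) * Rabs C).
  assert (Hg : forall j, 0 <= g j) by (intro j; apply Rmult_le_pos; [apply Rlt_le, Hpos | apply Rabs_pos]).
  destruct (rsum_cv_abs_bounded f (rsum (fun j => Rabs (f j)) N0 + 2 * Rabs C)) as [l Hl];
    [|exists l; exact Hl].
  intro N; eapply Rle_trans.
  - apply (rsum_abs_le_from f g N0 N Hg); intros j Hj.
    eapply Rle_trans; [apply HN0, Hj|]; unfold g, Rdiv; rewrite Rmult_comm.
    apply Rmult_le_compat_l; [apply Rlt_le, Hpos | apply Rle_abs].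
  - unfold g; rewrite rsum_mulr.
    pose proof (rsum_inv_sq_le N); pose proof (Hpos N); pose proof (Rabs_pos C).
    pose proof (rsum_le_mono _ N (S N) (fun j => Rlt_le _ _ (Hpos j)) (Nat.le_succ_diag_r N)).
    assert (0 < / INR (S N)) by (apply Rinv_0_lt_compat, lt_0_INR; lia).
    apply Rplus_le_compat_l; nra.
Qed.

Definition Cnorm (z : Cx) : R := sqrt (Re z * Re z + Im z * Im z).

Lemma Cnorm_ge0 (z : Cx) : 0 <= Cnorm z.
Proof. apply sqrt_pos. Qed.

Lemma Cnorm_gt0 (z : Cx) : z <> Cx0 -> 0 < Cnorm z.
Proof. intro Hz; pose proof (Cnorm2_neq0 z Hz); apply sqrt_lt_R0; nra. Qed.

Lemma Cnorm_mul (z w : Cx) : Cnorm (Cmul z w) = Cnorm z * Cnorm w.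
Proof. unfold Cnorm; rewrite <- sqrt_mult_alt by nra; f_equal; simpl; ring. Qed.

Lemma Cnorm_div (z w : Cx) : w <> Cx0 -> Cnorm (Cdiv z w) = Cnorm z / Cnorm w.
Proof.
  intro Hw; pose proof (Cnorm2_neq0 w Hw).
  unfold Cdiv; rewrite Cnorm_mul; unfold Rdiv; f_equal.
  unfold Cnorm; rewrite <- sqrt_inv; f_equal; simpl; field; exact H.
Qed.

Lemma Rabs_Re_le_Cnorm (z : Cx) : Rabs (Re z) <= Cnorm z.
Proof. unfold Cnorm; rewrite <- sqrt_Rsqr_abs; apply sqrt_le_1_alt; unfold Rsqr; nra. Qed.

Lemma Rabs_Im_le_Cnorm (z : Cx) : Rabs (Im z) <= Cnorm z.
Proof. unfold Cnorm; rewrite <- sqrt_Rsqr_abs; apply sqrt_le_1_alt; unfold Rsqr; nra. Qed.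

Lemma Re_le_Cnorm (z : Cx) : Re z <= Cnorm z.
Proof. pose proof (Rabs_Re_le_Cnorm z); pose proof (Rle_abs (Re z)); lra. Qed.

Lemma Cnorm_Cnat (n : nat) : Cnorm (Cnat n) = INR n.
Proof.
  unfold Cnorm, Cnat, RtoC; cbn [Re Im].
  replace (INR n * INR n + 0 * 0) with (INR n * INR n) by ring; apply sqrt_square, pos_INR.
Qed.

Lemma Cnorm_le_Re_add (w : Cx) (eps : R) :
  0 < eps -> Im w * Im w <= 2 * eps * Re w -> Cnorm w <= Re w + eps.
Proof.
  intros He H; assert (0 <= Re w) by nra; unfold Cnorm.
  rewrite <- (sqrt_square (Re w + eps)) by lra; apply sqrt_le_1_alt; nra.
Qed.

Lemma Cnorm_add_Cnat_le (w : Cx) (n m : nat) : 0 <= Re w + INR n -> (n <= m)%nat ->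
  Cnorm (Cadd w (Cnat n)) <= Cnorm (Cadd w (Cnat m)).
Proof.
  intros H Hm; apply le_INR in Hm.
  unfold Cnorm, Cadd, Cnat, RtoC; cbn [Re Im]; apply sqrt_le_1_alt; nra.
Qed.

Lemma Re_Csum (f : nat -> Cx) (N : nat) : Re (Csum f N) = rsum (fun j => Re (f j)) N.
Proof. induction N as [|N IH]; simpl; [reflexivity | rewrite IH; reflexivity]. Qed.

Lemma Im_Csum (f : nat -> Cx) (N : nat) : Im (Csum f N) = rsum (fun j => Im (f j)) N.
Proof. induction N as [|N IH]; simpl; [reflexivity | rewrite IH; reflexivity]. Qed.

Lemma Csum_cv_norm_bounded (f : nat -> Cx) (B : R) :
  (forall N, rsum (fun j => Cnorm (f j)) N <= B) -> exists S, Ccv (Csum f) S.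
Proof.
  intro H.
  destruct (rsum_cv_abs_bounded (fun j => Re (f j)) B) as [l1 H1].
  { intro N; eapply Rle_trans; [|apply (H N)]; apply rsum_le; intro; apply Rabs_Re_le_Cnorm. }
  destruct (rsum_cv_abs_bounded (fun j => Im (f j)) B) as [l2 H2].
  { intro N; eapply Rle_trans; [|apply (H N)]; apply rsum_le; intro; apply Rabs_Im_le_Cnorm. }
  exists (mkC l1 l2); split; cbn [Re Im].
  - eapply Un_cv_eventually_ext; [|exact H1]; apply filter_forall; intro; rewrite Re_Csum; reflexivity.
  - eapply Un_cv_eventually_ext; [|exact H2]; apply filter_forall; intro; rewrite Im_Csum; reflexivity.
Qed.

Lemma Csum_cv_Re_Im_le (g : nat -> Cx) (B : R) (l : Cx) :
  Ccv (Csum g) l -> (forall N, rsum (fun j => Cnorm (g j)) N <= B) ->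
  Rabs (Re l) <= B /\ Rabs (Im l) <= B.
Proof.
  intros [HR HI] HB.
  assert (Hre : forall N, Rabs (Re (Csum g N)) <= B).
  { intro N; rewrite Re_Csum; eapply Rle_trans; [apply Rabs_rsum_le|].
    eapply Rle_trans; [|apply (HB N)]; apply rsum_le; intro; apply Rabs_Re_le_Cnorm. }
  assert (Him : forall N, Rabs (Im (Csum g N)) <= B).
  { intro N; rewrite Im_Csum; eapply Rle_trans; [apply Rabs_rsum_le|].
    eapply Rle_trans; [|apply (HB N)]; apply rsum_le; intro; apply Rabs_Im_le_Cnorm. }
  split; eapply Un_cv_le; try apply cv_cvabs; try apply filter_forall; eassumption.
Qed.

Section Raabe.

Variables (w : nat -> R) (d : R) (M : nat).
Hypothesis d_pos : 0 < d.
Hypothesis w_ge0 : forall m, 0 <= w m.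
Hypothesis raabe_cond : forall m, (M <= m)%nat -> w (S m) * (INR m + 1 + d) <= INR m * w m.

Lemma raabe_partial_sum_bound (n : nat) : (M <= n)%nat ->
  d * (rsum w (S n) - rsum w (S M)) + INR n * w n <= INR M * w M.
Proof.
  induction 1 as [|n Hn IH]; [lra|].
  change (rsum w (S (S n))) with (rsum w (S n) + w (S n)).
  specialize (raabe_cond n Hn); rewrite S_INR; nra.
Qed.

Lemma raabe_bounded : exists B, forall N, rsum w N <= B.
Proof.
  exists (rsum w (S M) + INR M * w M / d); intro N.
  assert (0 <= INR M * w M / d)
    by (apply Rle_mult_inv_pos; [apply Rmult_le_pos; [apply pos_INR | apply w_ge0] | exact d_pos]).
  destruct (Nat.le_gt_cases N (S M)) as [HN|HN].
  - pose proof (rsum_le_mono w N (S M) w_ge0 HN); lra.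
  - destruct N as [|N]; [lia|].
    pose proof (raabe_partial_sum_bound N ltac:(lia)); pose proof (w_ge0 N); pose proof (pos_INR N).
    apply Rmult_le_reg_l with d; [exact d_pos|]; unfold Rdiv; rewrite Rmult_plus_distr_l.
    replace (d * (INR M * w M * / d)) with (INR M * w M) by (field; lra); nra.
Qed.

Lemma raabe_mul_index_noninc (p q : nat) : (M <= p)%nat -> (p <= q)%nat ->
  INR q * w q <= INR p * w p.
Proof.
  intros Hp Hq; induction Hq as [|q Hq IH]; [lra|].
  specialize (raabe_cond q ltac:(lia)); pose proof (w_ge0 (S q)); rewrite S_INR; nra.
Qed.

(* Since [m w m] decreases, the block of terms [w N, ..., w (2N-1)] already weighs at least
   [(2N) w (2N) / 2]. *)
Lemma raabe_block_bound (N : nat) : (M <= N)%nat -> (1 <= N)%nat ->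
  INR (2 * N) * w (2 * N)%nat <= 2 * (rsum w (2 * N) - rsum w N).
Proof.
  intros HM H1; set (u := INR (2 * N) * w (2 * N)%nat).
  assert (HN : 1 <= INR N) by (apply (le_INR 1); exact H1).
  assert (H2N : INR (2 * N) = 2 * INR N) by (rewrite mult_INR; simpl; ring).
  assert (Hw : forall k, (k < N)%nat -> u / (2 * INR N) <= w (N + k)%nat).
  { intros k Hk; pose proof (raabe_mul_index_noninc (N + k) (2 * N) ltac:(lia) ltac:(lia)) as Hu.
    assert (INR (N + k) <= 2 * INR N) by (rewrite <- H2N; apply le_INR; lia).
    pose proof (w_ge0 (N + k)%nat); fold u in Hu.
    apply Rmult_le_reg_r with (2 * INR N); [lra|]; unfold Rdiv; rewrite Rmult_assoc, Rinv_l by lra; nra. }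
  assert (K : forall k, (k <= N)%nat -> INR k * (u / (2 * INR N)) <= rsum w (N + k) - rsum w N).
  { induction k as [|k IH]; intro Hk; [rewrite Nat.add_0_r; simpl; lra|].
    rewrite Nat.add_succ_r; cbn [rsum]; rewrite S_INR.
    specialize (IH ltac:(lia)); specialize (Hw k ltac:(lia)); lra. }
  specialize (K N (le_n N)); replace (N + N)%nat with (2 * N)%nat in K by lia.
  replace (INR N * (u / (2 * INR N))) with (u / 2) in K by (field; lra); lra.
Qed.

Lemma raabe_mul_index_cv0 : Un_cv (fun m => INR m * w m) 0.
Proof.
  destruct raabe_bounded as [B HB].
  destruct (rsum_cv_abs_bounded w B) as [L HL].
  { intro N; eapply Rle_trans; [|apply (HB N)].
    apply rsum_le; intro j; rewrite Rabs_pos_eq by apply w_ge0; lra. }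
  intros eps He; destruct (CV_Cauchy _ (exist _ L HL) (eps / 2)) as [N1 HN1]; [lra|].
  exists (2 * S (max N1 M))%nat; intros m Hm; unfold Rdist; rewrite Rminus_0_r.
  set (N := Nat.div2 m).
  assert (HN : (2 * N <= m)%nat /\ (S (max N1 M) <= N)%nat)
    by (unfold N; pose proof (Nat.div2_odd m); destruct (Nat.odd m); simpl in *; lia).
  rewrite Rabs_pos_eq by (apply Rmult_le_pos; [apply pos_INR | apply w_ge0]).
  pose proof (raabe_mul_index_noninc (2 * N) m ltac:(lia) ltac:(lia)).
  pose proof (raabe_block_bound N ltac:(lia) ltac:(lia)).
  specialize (HN1 (2 * N)%nat N ltac:(lia) ltac:(lia)); unfold Rdist in HN1.
  apply Rabs_def2 in HN1; lra.
Qed.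

End Raabe.

(** * Gauss's product for the Gamma function *)

Lemma Rabs_le_between (u c : R) : Rmin 0 u <= c <= Rmax 0 u -> Rabs c <= Rabs u.
Proof. unfold Rmin, Rmax; intro Hc; destruct (Rle_dec 0 u); apply Rabs_le; split_Rabs; lra. Qed.

Lemma MVT_quadratic_bound (f f' : R -> R) (u K : R) : 0 <= K ->
  (forall c, Rmin 0 u <= c <= Rmax 0 u -> derivable_pt_lim f c (f' c)) ->
  (forall c, Rmin 0 u <= c <= Rmax 0 u -> Rabs (f' c) <= K * Rabs c) ->
  Rabs (f u - f 0) <= K * (u * u).
Proof.
  intros HK Hd Hb; destruct (MVT_abs f f' 0 u Hd) as [c [E Hc]].
  rewrite E, Rminus_0_r; specialize (Hb c Hc).
  pose proof (Rabs_le_between u c Hc).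
  replace (u * u) with (Rabs u * Rabs u) by (rewrite <- Rabs_mult; apply Rabs_pos_eq; nra).
  pose proof (Rabs_pos u); pose proof (Rabs_pos c); pose proof (Rabs_pos (f' c)).
  apply Rle_trans with (K * Rabs c * Rabs u); [apply Rmult_le_compat_r; lra|].
  assert (K * Rabs c <= K * Rabs u) by (apply Rmult_le_compat_l; lra); nra.
Qed.

Lemma ln_1p_sub_le (u r : R) : Rabs u <= r -> r <= / 2 -> Rabs (ln (1 + u) - u) <= 2 * (r * r).
Proof.
  intros Hu Hr.
  assert (Huu : u * u <= r * r).
  { replace (u * u) with (Rabs u * Rabs u) by (rewrite <- Rabs_mult; apply Rabs_pos_eq; nra).
    pose proof (Rabs_pos u); nra. }
  assert (H := MVT_quadratic_bound (fun s => ln (1 + s) - s) (fun s => / (1 + s) - 1) u 2 ltac:(lra)).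
  cbv beta in H; rewrite Rplus_0_r, ln_1, Rminus_0_r, Rminus_0_r in H.
  eapply Rle_trans; [apply H|lra]; intros c Hc;
    pose proof (Rabs_le_between u c Hc).
  - apply is_derive_Reals; auto_derive; [split_Rabs; lra | field; split_Rabs; lra].
  - assert (0 < 1 + c) by (split_Rabs; lra).
    replace (/ (1 + c) - 1) with (- c * / (1 + c)) by (field; lra).
    rewrite Rabs_mult, Rabs_Ropp, Rabs_inv, (Rabs_pos_eq (1 + c)) by lra.
    assert (/ (1 + c) <= 2) by (replace 2 with (/ / 2) by field; apply Rinv_le_contravar; split_Rabs; lra).
    pose proof (Rabs_pos c); assert (0 < / (1 + c)) by (apply Rinv_0_lt_compat; lra); nra.
Qed.

Lemma atan_sub_le (t r : R) : Rabs t <= r -> r <= 1 -> Rabs (atan t - t) <= r * r.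
Proof.
  intros Ht Hr.
  assert (Htt : t * t <= r * r).
  { replace (t * t) with (Rabs t * Rabs t) by (rewrite <- Rabs_mult; apply Rabs_pos_eq; nra).
    pose proof (Rabs_pos t); nra. }
  assert (H := MVT_quadratic_bound (fun s => atan s - s) (fun s => / (1 + s ^ 2) - 1) t 1 ltac:(lra)).
  cbv beta in H; rewrite atan_0, Rminus_0_r, Rminus_0_r, Rmult_1_l in H.
  eapply Rle_trans; [apply H|lra]; intros c Hc.
  - apply derivable_pt_lim_minus; [apply derivable_pt_lim_atan | apply derivable_pt_lim_id].
  - pose proof (Rabs_le_between t c Hc).
    assert (0 < 1 + c ^ 2) by nra.
    replace (/ (1 + c ^ 2) - 1) with (- (c * c) * / (1 + c ^ 2)) by (field; lra).
    rewrite Rabs_mult, Rabs_Ropp, Rabs_inv, (Rabs_pos_eq (c * c)), (Rabs_pos_eq (1 + c ^ 2)) by nra.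
    apply Rmult_le_reg_r with (1 + c ^ 2); [lra|]; rewrite Rmult_assoc, Rinv_l by lra.
    assert (c * c <= Rabs c) by (split_Rabs; nra); pose proof (Rabs_pos c); nra.
Qed.

Definition Cpolar (r t : R) : Cx := mkC (r * cos t) (r * sin t).

Lemma Cpolar_mul (r1 t1 r2 t2 : R) : Cmul (Cpolar r1 t1) (Cpolar r2 t2) = Cpolar (r1 * r2) (t1 + t2).
Proof. apply Cx_ext; unfold Cpolar, Cmul; cbn [Re Im]; rewrite ?cos_plus, ?sin_plus; ring. Qed.

Lemma Cpolar_norm2 (r t : R) : Re (Cpolar r t) * Re (Cpolar r t) + Im (Cpolar r t) * Im (Cpolar r t) = r * r.
Proof.
  pose proof (sin2_cos2 t) as E; unfold Rsqr in E; unfold Cpolar; cbn [Re Im].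
  transitivity (r * r * (sin t * sin t + cos t * cos t)); [ring | rewrite E; ring].
Qed.

Lemma Cpolar_inv (r t : R) : r <> 0 -> Cinv (Cpolar r t) = Cpolar (/ r) (- t).
Proof.
  intro Hr; pose proof (Cpolar_norm2 r t) as D; unfold Cinv; rewrite D.
  apply Cx_ext; unfold Cpolar; cbn [Re Im]; rewrite ?cos_neg, ?sin_neg; field; exact Hr.
Qed.

Lemma Cpolar_neq0 (r t : R) : r <> 0 -> Cpolar r t <> Cx0.
Proof.
  intros Hr E; apply Hr; pose proof (Cpolar_norm2 r t) as D; rewrite E in D; simpl in D; nra.
Qed.

Lemma Cpolar_1_0 : Cpolar 1 0 = Cx1.
Proof. apply Cx_ext; unfold Cpolar, Cx1; cbn [Re Im]; rewrite ?cos_0, ?sin_0; ring. Qed.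

Lemma Rcpow_Cpolar (x : R) (z : Cx) : Rcpow x z = Cpolar (exp (Re z * ln x)) (Im z * ln x).
Proof.
  unfold Rcpow, Cexp, Cpolar, Cmul, RtoC; cbn [Re Im].
  replace (Re z * ln x - Im z * 0) with (Re z * ln x) by ring.
  replace (Re z * 0 + Im z * ln x) with (Im z * ln x) by ring; reflexivity.
Qed.

Lemma Rcpow_neq0 (x : R) (z : Cx) : Rcpow x z <> Cx0.
Proof. rewrite Rcpow_Cpolar; apply Cpolar_neq0; pose proof (exp_pos (Re z * ln x)); lra. Qed.

Lemma Rcpow_add (x : R) (u v : Cx) : Rcpow x (Cadd u v) = Cmul (Rcpow x u) (Rcpow x v).
Proof.
  rewrite !Rcpow_Cpolar, Cpolar_mul, <- exp_plus; unfold Cadd; cbn [Re Im].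
  f_equal; [f_equal|]; ring.
Qed.

Lemma Cnat_Cpolar (n : nat) : (0 < n)%nat -> Cnat n = Cpolar (exp (ln (INR n))) 0.
Proof.
  intro Hn; rewrite exp_ln by (apply lt_0_INR; exact Hn).
  apply Cx_ext; unfold Cpolar, Cnat, RtoC; cbn [Re Im]; rewrite ?cos_0, ?sin_0; ring.
Qed.

Lemma mkC_Cpolar (p q : R) : 0 < p -> mkC p q = Cpolar (exp (ln (p * p + q * q) / 2)) (atan (q / p)).
Proof.
  intro Hp.
  assert (HQ : 0 < p * p + q * q) by nra.
  assert (Esq : exp (ln (p * p + q * q) / 2) = sqrt (p * p + q * q)).
  { assert (0 < sqrt (p * p + q * q)) by (apply sqrt_lt_R0, HQ).
    rewrite <- (exp_ln (sqrt (p * p + q * q))) by assumption; f_equal.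
    rewrite <- (sqrt_sqrt (p * p + q * q)) at 1 by lra; rewrite ln_mult by assumption; field. }
  assert (E : sqrt (p * p + q * q) = p * sqrt (1 + (q / p)²)).
  { replace (p * p + q * q) with ((p * p) * (1 + (q / p)²)) by (unfold Rsqr; field; lra).
    rewrite sqrt_mult_alt, sqrt_square by nra; reflexivity. }
  assert (0 < sqrt (1 + (q / p)²)) by (apply sqrt_lt_R0; pose proof (Rle_0_sqr (q / p)); lra).
  apply Cx_ext; unfold Cpolar; cbn [Re Im]; rewrite Esq, E, ?cos_atan, ?sin_atan; field; lra.
Qed.

Lemma Ccv_Cpolar_exp (u v : nat -> R) (U V : R) : Un_cv u U -> Un_cv v V ->
  Ccv (fun n => Cpolar (exp (u n)) (v n)) (Cpolar (exp U) V).
Proof.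
  intros Hu Hv; split; unfold Cpolar; cbn [Re Im]; apply CV_mult;
    apply continuity_seq; try assumption; apply derivable_continuous_pt;
    solve [apply derivable_pt_exp | apply derivable_pt_cos | apply derivable_pt_sin].
Qed.

Definition gamma_seq (n : nat) (z : Cx) : Cx :=
  Cdiv (Cmul (Cnat (Factorial.fact n)) (Rcpow (INR n) z)) (poch z (S n)).

(* [gamma_seq (S n) z / gamma_seq n z = exp (gamma_log_ratio_Re z n + i gamma_log_ratio_Im z n)] *)
Definition gamma_log_ratio_Re (z : Cx) (n : nat) : R :=
  ln (INR (S n)) + Re z * (ln (INR (S n)) - ln (INR n))
  - ln ((Re z + INR (S n)) * (Re z + INR (S n)) + Im z * Im z) / 2.

Definition gamma_log_ratio_Im (z : Cx) (n : nat) : R :=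
  Im z * (ln (INR (S n)) - ln (INR n)) - atan (Im z / (Re z + INR (S n))).

Lemma gamma_seq_S (z : Cx) (n : nat) : 0 < Re z -> (1 <= n)%nat ->
  gamma_seq (S n) z =
  Cmul (gamma_seq n z) (Cpolar (exp (gamma_log_ratio_Re z n)) (gamma_log_ratio_Im z n)).
Proof.
  intros Hz Hn.
  assert (Hn0 : 0 < INR n) by (apply lt_0_INR; lia).
  assert (E1 : gamma_seq (S n) z = Cmul (gamma_seq n z)
     (Cmul (Cmul (Cnat (S n)) (Cmul (Rcpow (INR (S n)) z) (Cinv (Rcpow (INR n) z))))
           (Cinv (Cadd z (Cnat (S n)))))).
  { pose proof (poch_neq0 z (S n) (notNonPosInt_Re_pos z Hz)).
    pose proof (add_Cnat_neq0 z (S n) (notNonPosInt_Re_pos z Hz)).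
    pose proof (Rcpow_neq0 (INR n) z); pose proof (Cnat_fact_neq0 n).
    unfold gamma_seq; rewrite Cnat_fact_S, (poch_S z (S n)); field; repeat split; auto. }
  rewrite E1; f_equal.
  replace (Cadd z (Cnat (S n))) with (mkC (Re z + INR (S n)) (Im z))
    by (apply Cx_ext; unfold Cadd, Cnat, RtoC; cbn [Re Im]; ring).
  rewrite mkC_Cpolar by (pose proof (pos_INR (S n)); lra).
  rewrite (Cnat_Cpolar (S n)), !Rcpow_Cpolar, !Cpolar_inv by (lia || apply Rgt_not_eq, exp_pos).
  rewrite <- !exp_Ropp, !Cpolar_mul, <- !exp_plus.
  unfold gamma_log_ratio_Re, gamma_log_ratio_Im; f_equal; [f_equal|]; ring.
Qed.

Lemma gamma_seq_S_prod (z : Cx) (n : nat) : 0 < Re z ->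
  gamma_seq (S n) z =
  Cmul (gamma_seq 1 z) (Cpolar (exp (rsum (fun i => gamma_log_ratio_Re z (S i)) n))
                               (rsum (fun i => gamma_log_ratio_Im z (S i)) n)).
Proof.
  intro Hz; induction n as [|n IH].
  - simpl rsum; rewrite exp_0, Cpolar_1_0; ring.
  - rewrite gamma_seq_S, IH by (assumption || lia); cbn [rsum].
    rewrite exp_plus, <- Cpolar_mul; ring.
Qed.

Lemma ln_1p_inv_sub_le (N : R) : 2 <= N -> Rabs (ln (1 + / N) - / N) <= 2 / (N * N).
Proof.
  intro HN; replace (2 / (N * N)) with (2 * (/ N * / N)) by (field; lra).
  apply ln_1p_sub_le; [rewrite Rabs_pos_eq; [lra|] | apply Rinv_le_contravar; lra].
  apply Rlt_le, Rinv_0_lt_compat; lra.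
Qed.

Lemma ln_S_sub_ln (n : nat) : (1 <= n)%nat -> ln (INR (S n)) - ln (INR n) = ln (1 + / INR n).
Proof.
  intro Hn; assert (0 < INR n) by (apply lt_0_INR; lia).
  rewrite S_INR; replace (INR n + 1) with (INR n * (1 + / INR n)) by (field; lra).
  rewrite ln_mult; [ring | lra | ].
  apply Rplus_lt_0_compat; [lra | apply Rinv_0_lt_compat; lra].
Qed.

Lemma gamma_log_ratio_Re_eq (z : Cx) (n : nat) : 0 < Re z -> (1 <= n)%nat ->
  let x := Re z in let y := Im z in let N := INR n in let M := N + 1 in
  let v := (2 * x * M + (x * x + y * y)) / (M * M) in
  gamma_log_ratio_Re z n =
  x / (N * M) - (x * x + y * y) / (2 * (M * M)) + x * (ln (1 + / N) - / N) - (ln (1 + v) - v) / 2.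
Proof.
  intros Hz Hn x y N M v.
  assert (HN : 1 <= N) by (apply (le_INR 1); lia).
  assert (HM : INR (S n) = M) by (unfold M, N; apply S_INR).
  assert (Hv : 0 < 1 + v).
  { replace (1 + v) with (((x + M) * (x + M) + y * y) / (M * M)) by (unfold v, M; field; lra).
    apply Rdiv_lt_0_compat; unfold x, M in *; nra. }
  assert (E : ln ((x + M) * (x + M) + y * y) = ln M + ln M + ln (1 + v)).
  { rewrite <- !ln_mult by (unfold x, M in *; nra); f_equal; unfold v, M; field; lra. }
  unfold gamma_log_ratio_Re; rewrite ln_S_sub_ln by assumption; rewrite HM; fold x y N; rewrite E.
  replace (ln M) with (ln N + ln (1 + / N))
    by (rewrite <- ln_mult by (try apply Rplus_lt_0_compat; try apply Rinv_0_lt_compat; lra);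
        f_equal; unfold M; field; lra).
  unfold v, M; field; lra.
Qed.

Lemma gamma_log_ratio_Re_le (z : Cx) (m : nat) : 0 < Re z ->
  let x := Re z in let y := Im z in let K := 2 * x + (x * x + y * y) in
  2 <= INR m -> 2 * K <= INR m ->
  Rabs (gamma_log_ratio_Re z m) <= (3 * x + (x * x + y * y) / 2 + K * K) / (INR m * INR m).
Proof.
  intros Hz x y K H2 HK.
  assert (Hm : (1 <= m)%nat) by (destruct m; [simpl in H2; lra | lia]).
  rewrite gamma_log_ratio_Re_eq by assumption; cbv zeta; fold x y; set (N := INR m) in *.
  set (v := (2 * x * (N + 1) + (x * x + y * y)) / ((N + 1) * (N + 1))).
  assert (Hx : 0 < x) by exact Hz.
  assert (Hv : Rabs v <= K / N).
  { unfold v; rewrite Rabs_pos_eq by (apply Rle_mult_inv_pos; nra).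
    apply Rmult_le_reg_r with (N * ((N + 1) * (N + 1))); [nra|].
    unfold Rdiv; field_simplify; unfold K; nra. }
  assert (A1 : Rabs (x / (N * (N + 1))) <= x / (N * N)).
  { rewrite Rabs_pos_eq by (apply Rle_mult_inv_pos; nra).
    apply Rmult_le_compat_l; [lra | apply Rinv_le_contravar; nra]. }
  assert (A2 : Rabs ((x * x + y * y) / (2 * ((N + 1) * (N + 1)))) <= (x * x + y * y) / 2 / (N * N)).
  { rewrite Rabs_pos_eq by (apply Rle_mult_inv_pos; nra).
    unfold Rdiv; rewrite Rmult_assoc, <- Rinv_mult.
    apply Rmult_le_compat_l; [nra | apply Rinv_le_contravar; nra]. }
  assert (A3 : Rabs (x * (ln (1 + / N) - / N)) <= x * (2 / (N * N))).
  { rewrite Rabs_mult, (Rabs_pos_eq x) by lra.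
    apply Rmult_le_compat_l; [lra | apply ln_1p_inv_sub_le; lra]. }
  assert (A4 : Rabs ((ln (1 + v) - v) / 2) <= K * K / (N * N)).
  { assert (K / N <= / 2)
      by (apply Rmult_le_reg_r with N; [lra|]; unfold Rdiv; rewrite Rmult_assoc, Rinv_l by lra; lra).
    pose proof (ln_1p_sub_le v (K / N) Hv ltac:(lra)).
    unfold Rdiv at 1; rewrite Rabs_mult, (Rabs_pos_eq (/ 2)) by lra.
    replace (K * K / (N * N)) with (2 * (K / N * (K / N)) * / 2) by (field; lra).
    apply Rmult_le_compat_r; lra. }
  replace ((3 * x + (x * x + y * y) / 2 + K * K) / (N * N)) with
    (x / (N * N) + (x * x + y * y) / 2 / (N * N) + x * (2 / (N * N)) + K * K / (N * N)) by (field; lra).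
  unfold Rminus; repeat (eapply Rle_trans; [apply Rabs_triang | apply Rplus_le_compat]);
    rewrite ?Rabs_Ropp; assumption.
Qed.

Lemma gamma_log_ratio_Im_le (z : Cx) (m : nat) : 0 < Re z ->
  let x := Re z in let y := Im z in
  2 <= INR m -> Rabs y <= INR m ->
  Rabs (gamma_log_ratio_Im z m) <= (Rabs y * (x + 1) + 2 * Rabs y + y * y) / (INR m * INR m).
Proof.
  intros Hz x y H2 Hy.
  assert (Hm : (1 <= m)%nat) by (destruct m; [simpl in H2; lra | lia]).
  assert (Hx : 0 < x) by exact Hz.
  unfold gamma_log_ratio_Im; rewrite ln_S_sub_ln, S_INR by assumption; fold x y.
  set (N := INR m) in *; set (t := y / (x + (N + 1))).
  assert (Ht : Rabs t <= Rabs y / N).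
  { unfold t, Rdiv; rewrite Rabs_mult, Rabs_inv, (Rabs_pos_eq (x + (N + 1))) by lra.
    apply Rmult_le_compat_l; [apply Rabs_pos | apply Rinv_le_contravar; lra]. }
  assert (Hy1 : Rabs y / N <= 1)
    by (apply Rmult_le_reg_r with N; [lra|]; unfold Rdiv; rewrite Rmult_assoc, Rinv_l by lra; lra).
  replace (y * ln (1 + / N) - atan t) with
    (y * (x + 1) / (N * (x + (N + 1))) + y * (ln (1 + / N) - / N) - (atan t - t))
    by (unfold t; field; split; lra).
  assert (A1 : Rabs (y * (x + 1) / (N * (x + (N + 1)))) <= Rabs y * (x + 1) / (N * N)).
  { unfold Rdiv; rewrite !Rabs_mult, Rabs_inv, (Rabs_pos_eq (x + 1)), (Rabs_pos_eq (N * _)) by nra.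
    apply Rmult_le_compat_l; [pose proof (Rabs_pos y); nra | apply Rinv_le_contravar; nra]. }
  assert (A2 : Rabs (y * (ln (1 + / N) - / N)) <= Rabs y * (2 / (N * N))).
  { rewrite Rabs_mult; apply Rmult_le_compat_l; [apply Rabs_pos | apply ln_1p_inv_sub_le; lra]. }
  assert (A3 : Rabs (atan t - t) <= y * y / (N * N)).
  { assert (Eyy : Rabs y * Rabs y = y * y) by (rewrite <- Rabs_mult; apply Rabs_pos_eq; nra).
    replace (y * y / (N * N)) with (Rabs y / N * (Rabs y / N)) by (rewrite <- Eyy; field; lra).
    apply atan_sub_le; assumption. }
  replace ((Rabs y * (x + 1) + 2 * Rabs y + y * y) / (N * N)) with
    (Rabs y * (x + 1) / (N * N) + Rabs y * (2 / (N * N)) + y * y / (N * N)) by (field; lra).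
  unfold Rminus; repeat (eapply Rle_trans; [apply Rabs_triang | apply Rplus_le_compat]);
    rewrite ?Rabs_Ropp; assumption.
Qed.

Lemma eventually_bound_inv_sq (f : nat -> R) (C T : R) :
  (forall m : nat, T <= INR m -> Rabs (f m) <= C / (INR m * INR m)) ->
  exists C', eventually (fun n => Rabs (f (S n)) <= C' / (INR (S n) * INR (S n))).
Proof.
  intro Hf; exists C; apply (filter_imp (fun n => T <= INR n)); [|apply eventually_INR_ge].
  intros n Hn; apply Hf; rewrite S_INR; lra.
Qed.

Lemma gamma_seq_cv_Re_pos (z : Cx) : 0 < Re z ->
  exists L, L <> Cx0 /\ Ccv (fun n => gamma_seq n z) L.
Proof.
  intro Hz; set (x := Re z); set (y := Im z); set (K := 2 * x + (x * x + y * y)).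
  destruct (eventually_bound_inv_sq (gamma_log_ratio_Re z)
              (3 * x + (x * x + y * y) / 2 + K * K) (2 * K + 2)) as [C1 H1].
  { assert (0 <= K) by (unfold K, x; nra).
    intros m Hm; apply (gamma_log_ratio_Re_le z m Hz); fold x y K; lra. }
  destruct (eventually_bound_inv_sq (gamma_log_ratio_Im z)
              (Rabs y * (x + 1) + 2 * Rabs y + y * y) (Rabs y + 2)) as [C2 H2].
  { intros m Hm; apply (gamma_log_ratio_Im_le z m Hz); fold x y; pose proof (Rabs_pos y); lra. }
  destruct (rsum_cv_inv_sq _ _ H1) as [A HA]; destruct (rsum_cv_inv_sq _ _ H2) as [B HB].
  exists (Cmul (gamma_seq 1 z) (Cpolar (exp A) B)); split.
  - apply Cmul_neq0; [|apply Cpolar_neq0, Rgt_not_eq, exp_pos].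
    apply Cdiv_neq0; [apply Cmul_neq0; [apply Cnat_fact_neq0 | apply Rcpow_neq0]|].
    apply poch_neq0, notNonPosInt_Re_pos, Hz.
  - apply Ccv_of_S, (Ccv_ext (fun n => Cmul (gamma_seq 1 z)
      (Cpolar (exp (rsum (fun i => gamma_log_ratio_Re z (S i)) n))
              (rsum (fun i => gamma_log_ratio_Im z (S i)) n)))).
    { intro n; symmetry; apply gamma_seq_S_prod, Hz. }
    apply Ccv_mul; [apply Ccv_const | apply Ccv_Cpolar_exp; assumption].
Qed.

Lemma gamma_seq_pred (z : Cx) (n : nat) : (1 <= n)%nat -> notNonPosInt z ->
  gamma_seq n z =
  Cmul (gamma_seq n (Cadd z Cx1)) (Cdiv (Cadd Cx1 (Cmul (Cadd z Cx1) (Cinv (Cnat n)))) z).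
Proof.
  intros Hn Hz; pose proof (notNonPosInt_S z Hz) as Hz1.
  assert (Hn0 : 0 < INR n) by (apply lt_0_INR; lia).
  pose proof (Cnat_neq0 n Hn); pose proof (notNonPosInt_neq0 z Hz).
  pose proof (poch_neq0 _ n Hz1); pose proof (add_Cnat_neq0 _ n Hz1).
  pose proof (Cnat_fact_neq0 n); pose proof (Rcpow_neq0 (INR n) z).
  assert (E : Rcpow (INR n) (Cadd z Cx1) = Cmul (Rcpow (INR n) z) (Cnat n)).
  { rewrite Rcpow_add, (Rcpow_Cpolar _ Cx1), (Cnat_Cpolar n) by lia; f_equal.
    unfold Cx1; cbn [Re Im]; f_equal; [f_equal|]; ring. }
  unfold gamma_seq; rewrite E, (poch_S (Cadd z Cx1) n), poch_Sl.
  field; repeat split; auto.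
Qed.

Lemma gamma_seq_cv_pred (z L : Cx) : notNonPosInt z ->
  Ccv (fun n => gamma_seq n (Cadd z Cx1)) L -> Ccv (fun n => gamma_seq n z) (Cdiv L z).
Proof.
  intros Hz H; pose proof (notNonPosInt_neq0 z Hz).
  apply (Ccv_eventually_ext (fun n => Cmul (gamma_seq n (Cadd z Cx1))
           (Cdiv (Cadd Cx1 (Cmul (Cadd z Cx1) (Cinv (Cnat n)))) z))).
  { exists 1%nat; intros n Hn; symmetry; apply gamma_seq_pred; assumption. }
  replace (Cdiv L z) with (Cmul L (Cdiv (Cadd Cx1 Cx0) z)) by (field; assumption).
  apply Ccv_mul; [exact H|]; apply Ccv_div; [assumption | | apply Ccv_const].
  apply Ccv_add; [apply Ccv_const | apply Ccv_div_Cnat].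
Qed.

Lemma gamma_seq_cv_nonzero (z : Cx) : notNonPosInt z ->
  exists L, L <> Cx0 /\ Ccv (fun n => gamma_seq n z) L.
Proof.
  intro Hz; destruct (INR_unbounded (- Re z)) as [k Hk].
  assert (Hk' : 0 < Re z + INR k) by lra; clear Hk; revert z Hz Hk'.
  induction k as [|k IH]; intros z Hz Hk.
  - apply gamma_seq_cv_Re_pos; simpl in Hk; lra.
  - destruct (IH (Cadd z Cx1) (notNonPosInt_S z Hz)) as [L [HL HC]].
    { rewrite S_INR in Hk; cbn; lra. }
    exists (Cdiv L z); split; [apply Cdiv_neq0, notNonPosInt_neq0; assumption|].
    apply gamma_seq_cv_pred; assumption.
Qed.

Lemma gamma_seq_cv (z : Cx) : notNonPosInt z -> Ccv (fun n => gamma_seq n z) (Gamma z).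
Proof.
  intro Hz; destruct (gamma_seq_cv_nonzero z Hz) as [L [_ HC]].
  change (Gamma z) with (Clim (fun n => gamma_seq n z)); rewrite (Clim_eq _ _ HC); exact HC.
Qed.

Lemma Gamma_neq0 (z : Cx) : notNonPosInt z -> Gamma z <> Cx0.
Proof.
  intro Hz; destruct (gamma_seq_cv_nonzero z Hz) as [L [HL HC]].
  rewrite (Ccv_unique _ _ _ (gamma_seq_cv z Hz) HC); exact HL.
Qed.

Lemma Gamma_S (z : Cx) : notNonPosInt z -> Gamma (Cadd z Cx1) = Cmul z (Gamma z).
Proof.
  intro Hz; pose proof (gamma_seq_cv_pred z _ Hz (gamma_seq_cv _ (notNonPosInt_S z Hz))) as H.
  rewrite <- (Ccv_unique _ _ _ H (gamma_seq_cv z Hz)); field; apply notNonPosInt_neq0, Hz.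
Qed.

Lemma Gamma_add_Cnat (z : Cx) (n : nat) : notNonPosInt z ->
  Gamma (Cadd z (Cnat n)) = Cmul (poch z n) (Gamma z).
Proof.
  intro Hz; induction n as [|n IH].
  - replace (Cadd z (Cnat 0)) with z by (apply Cx_ext; simpl; ring); simpl; ring.
  - rewrite Cnat_S; replace (Cadd z (Cadd (Cnat n) Cx1)) with (Cadd (Cadd z (Cnat n)) Cx1) by ring.
    rewrite Gamma_S, IH, poch_S by (apply notNonPosInt_add_Cnat, Hz); ring.
Qed.

(** * Gauss's summation theorem *)

Definition F21_term (a b c : Cx) (m : nat) : Cx :=
  Cdiv (Cmul (poch a m) (poch b m)) (Cmul (Cnat (Factorial.fact m)) (poch c m)).

Lemma F21_term_0 (a b c : Cx) : F21_term a b c 0 = Cx1.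
Proof.
  unfold F21_term; simpl poch.
  replace (Cnat (Factorial.fact 0)) with Cx1 by (apply Cx_ext; simpl; ring).
  field; exact Cx1_neq0.
Qed.

Lemma F21_term_S (a b c : Cx) (m : nat) : notNonPosInt c ->
  F21_term a b c (S m) =
  Cmul (F21_term a b c m)
       (Cdiv (Cmul (Cadd a (Cnat m)) (Cadd b (Cnat m))) (Cmul (Cnat (S m)) (Cadd c (Cnat m)))).
Proof.
  intro Hc; pose proof (poch_neq0 c m Hc); pose proof (add_Cnat_neq0 c m Hc).
  pose proof (Cnat_fact_neq0 m); pose proof (Cnat_neq0 (S m) (Nat.lt_0_succ m)).
  unfold F21_term; rewrite !poch_S, Cnat_fact_S; field; repeat split; auto.
Qed.

Lemma eventually_cubic_le (p q r g : R) : p + q + r < g + 1 ->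
  eventually (fun m => (INR m + p) * (INR m + q) * (INR m + r) <= INR m * (INR m + 1) * (INR m + g)).
Proof.
  intro H; set (A := g - (p * q + p * r + q * r)); set (B := p * q * r).
  set (delta := g + 1 - (p + q + r)).
  apply (filter_imp (fun m => 1 + (Rabs A + Rabs B) / delta <= INR m)); [|apply eventually_INR_ge].
  intros m Hm; set (x := INR m) in *.
  assert (Hd : 0 < delta) by (unfold delta; lra).
  assert (HAB : Rabs A + Rabs B <= delta * x).
  { replace (Rabs A + Rabs B) with (delta * ((Rabs A + Rabs B) / delta)) by (field; lra).
    apply Rmult_le_compat_l; lra. }
  assert (E : x * (x + 1) * (x + g) - (x + p) * (x + q) * (x + r) = delta * x * x + A * x - B)
    by (unfold delta, A, B; ring).
  assert (H0 : 0 <= (Rabs A + Rabs B) / delta)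
    by (apply Rle_mult_inv_pos; [pose proof (Rabs_pos A); pose proof (Rabs_pos B) |]; lra).
  assert (Hx : 1 <= x) by lra.
  assert (0 <= x * (delta * x - Rabs A - Rabs B)) by (apply Rmult_le_pos; lra).
  assert (0 <= (A + Rabs A) * x)
    by (apply Rmult_le_pos; [pose proof (Rle_abs (- A)); rewrite Rabs_Ropp in *|]; lra).
  assert (0 <= Rabs B * (x - 1)) by (apply Rmult_le_pos; [apply Rabs_pos | lra]).
  pose proof (Rle_abs B); nra.
Qed.

Lemma eventually_Cnorm_add_Cnat_le (a : Cx) (e : R) : 0 < e ->
  eventually (fun m => Cnorm (Cadd a (Cnat m)) <= Re a + INR m + e).
Proof.
  intro He; apply (filter_imp (fun m => Rabs (Re a) + Im a * Im a / (2 * e) <= INR m));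
    [|apply eventually_INR_ge].
  intros m Hm; apply Cnorm_le_Re_add; [exact He|]; cbn [Re Im Cadd Cnat RtoC].
  assert (0 <= Im a * Im a / (2 * e)) by (apply Rle_mult_inv_pos; nra).
  replace (Im a + 0) with (Im a) by ring.
  replace (Im a * Im a) with (2 * e * (Im a * Im a / (2 * e))) by (field; lra).
  pose proof (Rle_abs (- Re a)); rewrite Rabs_Ropp in *; nra.
Qed.

Lemma F21_term_raabe (a b c : Cx) : notNonPosInt c -> 0 < Re c - Re a - Re b ->
  eventually (fun m => Cnorm (F21_term a b c (S m)) * (INR m + 1 + (Re c - Re a - Re b) / 2)
                       <= INR m * Cnorm (F21_term a b c m)).
Proof.
  intros Hc Hs; set (s := Re c - Re a - Re b) in *; set (e := s / 8).
  assert (He : 0 < e) by (unfold e; lra).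
  assert (Es : s = Re c - Re a - Re b) by reflexivity.
  generalize (@filter_and _ eventually _ _ _ (eventually_Cnorm_add_Cnat_le a e He)
             (@filter_and _ eventually _ _ _ (eventually_Cnorm_add_Cnat_le b e He)
             (@filter_and _ eventually _ _ _
               (eventually_cubic_le (Re a + e) (Re b + e) (1 + s / 2) (Re c) ltac:(unfold e; lra))
                             (eventually_INR_ge (Rabs (Re a) + Rabs (Re b) + Rabs (Re c) + 1))))).
  apply filter_imp; intros m (Ha & Hb & Hpoly & Hm).
  pose proof (Rle_abs (Re a)); pose proof (Rle_abs (- Re a)); pose proof (Rle_abs (Re b));
    pose proof (Rle_abs (- Re b)); pose proof (Rle_abs (- Re c)); rewrite !Rabs_Ropp in *.
  pose proof (Re_le_Cnorm (Cadd c (Cnat m))) as Hcm; cbn [Re Cadd Cnat RtoC] in Hcm; pose proof (pos_INR m).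
  pose proof (Cnorm_ge0 (Cadd a (Cnat m))); pose proof (Cnorm_ge0 (Cadd b (Cnat m))).
  assert (Key : Cnorm (Cadd a (Cnat m)) * Cnorm (Cadd b (Cnat m)) * (INR m + 1 + s / 2)
                <= INR m * (INR m + 1) * Cnorm (Cadd c (Cnat m))).
  { apply Rle_trans with ((INR m + (Re a + e)) * (INR m + (Re b + e)) * (INR m + (1 + s / 2))).
    - apply Rmult_le_compat; [apply Rmult_le_pos; lra | lra | apply Rmult_le_compat; lra | lra].
    - apply Rle_trans with (INR m * (INR m + 1) * (INR m + Re c)); [exact Hpoly|].
      apply Rmult_le_compat_l; [nra | lra]. }
  pose proof (add_Cnat_neq0 c m Hc); pose proof (Cnat_neq0 (S m) (Nat.lt_0_succ m)).
  rewrite F21_term_S, Cnorm_mul, Cnorm_div, !Cnorm_mul, Cnorm_Cnat, S_INR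
    by (assumption || apply Cmul_neq0; assumption).
  pose proof (Cnorm_ge0 (F21_term a b c m)).
  assert (0 < Cnorm (Cadd c (Cnat m))) by lra.
  apply Rmult_le_reg_r with ((INR m + 1) * Cnorm (Cadd c (Cnat m))); [nra|].
  replace (Cnorm (F21_term a b c m) * (Cnorm (Cadd a (Cnat m)) * Cnorm (Cadd b (Cnat m)) /
             ((INR m + 1) * Cnorm (Cadd c (Cnat m)))) * (INR m + 1 + s / 2) *
           ((INR m + 1) * Cnorm (Cadd c (Cnat m))))
    with (Cnorm (F21_term a b c m) *
          (Cnorm (Cadd a (Cnat m)) * Cnorm (Cadd b (Cnat m)) * (INR m + 1 + s / 2)))
    by (field; lra).
  replace (INR m * Cnorm (F21_term a b c m) * ((INR m + 1) * Cnorm (Cadd c (Cnat m))))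
    with (Cnorm (F21_term a b c m) * (INR m * (INR m + 1) * Cnorm (Cadd c (Cnat m)))) by ring.
  apply Rmult_le_compat_l; assumption.
Qed.

Section F21Summable.

Variables (a b c : Cx).
Hypothesis c_nnpi : notNonPosInt c.
Hypothesis Re_excess_pos : 0 < Re c - Re a - Re b.

Lemma F21_norm_bounded : exists B, forall N, rsum (fun m => Cnorm (F21_term a b c m)) N <= B.
Proof.
  destruct (F21_term_raabe a b c c_nnpi Re_excess_pos) as [M HM].
  apply (raabe_bounded _ ((Re c - Re a - Re b) / 2) M); [lra | intro; apply Cnorm_ge0 | exact HM].
Qed.

Lemma F21_cv : exists S, Ccv (Csum (F21_term a b c)) S.
Proof. destruct F21_norm_bounded as [B HB]; exact (Csum_cv_norm_bounded _ B HB). Qed.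

Lemma F21_mul_index_cv0 : Ccv (fun m => Cmul (Cnat m) (F21_term a b c m)) Cx0.
Proof.
  destruct (F21_term_raabe a b c c_nnpi Re_excess_pos) as [M HM].
  pose proof (raabe_mul_index_cv0 _ ((Re c - Re a - Re b) / 2) M ltac:(lra) (fun m => Cnorm_ge0 _) HM) as H.
  split; cbn [Re Im Cx0]; apply (Un_cv_squeeze0 _ _ H), filter_forall; intro m;
    rewrite <- Cnorm_Cnat, <- Cnorm_mul; [apply Rabs_Re_le_Cnorm | apply Rabs_Im_le_Cnorm].
Qed.

End F21Summable.

Lemma F21_contiguous_term (a b c : Cx) (m : nat) : notNonPosInt c ->
  Csub (Cmul (Cmul c (Csub c (Cadd a b))) (F21_term a b c m))
       (Cmul (Cmul (Csub c a) (Csub c b)) (F21_term a b (Cadd c Cx1) m)) =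
  Csub (Cmul c (Cmul (Cnat m) (F21_term a b c m)))
       (Cmul c (Cmul (Cnat (S m)) (F21_term a b c (S m)))).
Proof.
  intro Hc; pose proof (poch_neq0 c m Hc); pose proof (add_Cnat_neq0 c m Hc).
  pose proof (notNonPosInt_neq0 c Hc); pose proof (Cnat_fact_neq0 m).
  pose proof (Cnat_neq0 (S m) (Nat.lt_0_succ m)).
  assert (E : poch (Cadd c Cx1) m = Cdiv (Cmul (poch c m) (Cadd c (Cnat m))) c)
    by (rewrite <- poch_S, poch_Sl; field; assumption).
  unfold F21_term; rewrite E, !poch_S, Cnat_fact_S; rewrite Cnat_S in *; field; repeat split; auto.
Qed.

(* Summing [F21_contiguous_term] telescopes; the boundary term [c m F21_term a b c m]
   vanishes in the limit. *)
Lemma F21_contiguous (a b c S1 S2 : Cx) : notNonPosInt c -> 0 < Re c - Re a - Re b ->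
  Ccv (Csum (F21_term a b c)) S1 -> Ccv (Csum (F21_term a b (Cadd c Cx1))) S2 ->
  Cmul (Cmul c (Csub c (Cadd a b))) S1 = Cmul (Cmul (Csub c a) (Csub c b)) S2.
Proof.
  intros Hc Hs H1 H2; set (g := fun m => Cmul c (Cmul (Cnat m) (F21_term a b c m))).
  assert (L : Ccv (fun N => Csub (Cmul (Cmul c (Csub c (Cadd a b))) (Csum (F21_term a b c) N))
                                  (Cmul (Cmul (Csub c a) (Csub c b)) (Csum (F21_term a b (Cadd c Cx1)) N)))
                  (Csub (g 0%nat) (Cmul c Cx0))).
  { apply (Ccv_ext (fun N => Csub (g 0%nat) (g N))).
    - intro N; rewrite <- Csum_telescope, <- !Csum_mull, <- Csum_sub.
      apply Csum_ext; intros m _; unfold g; rewrite F21_contiguous_term by exact Hc; reflexivity.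
    - apply Ccv_sub; [apply Ccv_const|].
      apply Ccv_mul; [apply Ccv_const | apply F21_mul_index_cv0; assumption]. }
  assert (L' := Ccv_sub _ _ _ _ (Ccv_mul _ _ _ _ (Ccv_const (Cmul c (Csub c (Cadd a b)))) H1)
                                (Ccv_mul _ _ _ _ (Ccv_const (Cmul (Csub c a) (Csub c b))) H2)).
  pose proof (Ccv_unique _ _ _ L L') as E; unfold g in E.
  replace (Cmul (Cnat 0) (F21_term a b c 0)) with Cx0 in E by (apply Cx_ext; simpl; ring).
  replace (Cmul (Cmul c (Csub c (Cadd a b))) S1) with
    (Cadd (Csub (Cmul (Cmul c (Csub c (Cadd a b))) S1) (Cmul (Cmul (Csub c a) (Csub c b)) S2))
          (Cmul (Cmul (Csub c a) (Csub c b)) S2)) by ring.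
  rewrite <- E; ring.
Qed.

Lemma gamma_seq_neq0 (z : Cx) (n : nat) : notNonPosInt z -> gamma_seq n z <> Cx0.
Proof.
  intro Hz; apply Cdiv_neq0; [apply Cmul_neq0; [apply Cnat_fact_neq0 | apply Rcpow_neq0]|].
  apply poch_neq0, Hz.
Qed.

Lemma poch_gamma_seq (z : Cx) (n : nat) : notNonPosInt z ->
  poch z n = Cdiv (Cmul (Cnat (Factorial.fact n)) (Rcpow (INR n) z))
                  (Cmul (gamma_seq n z) (Cadd z (Cnat n))).
Proof.
  intro Hz; pose proof (poch_neq0 z n Hz); pose proof (add_Cnat_neq0 z n Hz).
  pose proof (Cnat_fact_neq0 n); pose proof (Rcpow_neq0 (INR n) z).
  unfold gamma_seq; rewrite poch_S; field; repeat split; auto.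
Qed.

Definition gauss_ratio (a b c : Cx) (n : nat) : Cx :=
  Cdiv (Cmul (poch (Csub c a) n) (poch (Csub c b) n)) (Cmul (poch c n) (poch (Csub c (Cadd a b)) n)).

Definition one_add_div_Cnat (z : Cx) (n : nat) : Cx := Cadd Cx1 (Cmul z (Cinv (Cnat n))).

Lemma one_add_div_Cnat_cv (z : Cx) : Ccv (one_add_div_Cnat z) Cx1.
Proof.
  pose proof (Ccv_add _ _ _ _ (Ccv_const Cx1) (Ccv_div_Cnat z)) as H.
  replace (Cadd Cx1 Cx0) with Cx1 in H by ring; exact H.
Qed.

(* The Stirling-type factors [n^z] of the four Pochhammer symbols cancel because
   [c + (c - a - b) = (c - a) + (c - b)]. *)
Lemma gauss_ratio_gamma_seq (a b c : Cx) (n : nat) :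
  notNonPosInt c -> notNonPosInt (Csub c a) -> notNonPosInt (Csub c b) ->
  notNonPosInt (Csub c (Cadd a b)) -> (1 <= n)%nat ->
  gauss_ratio a b c n =
  Cmul (Cdiv (Cmul (gamma_seq n c) (gamma_seq n (Csub c (Cadd a b))))
             (Cmul (gamma_seq n (Csub c a)) (gamma_seq n (Csub c b))))
       (Cdiv (Cmul (one_add_div_Cnat c n) (one_add_div_Cnat (Csub c (Cadd a b)) n))
             (Cmul (one_add_div_Cnat (Csub c a) n) (one_add_div_Cnat (Csub c b) n))).
Proof.
  intros Hc Ha Hb Hd Hn.
  assert (E : Rcpow (INR n) c = Cdiv (Cmul (Rcpow (INR n) (Csub c a)) (Rcpow (INR n) (Csub c b)))
                                     (Rcpow (INR n) (Csub c (Cadd a b)))).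
  { pose proof (Rcpow_neq0 (INR n) (Csub c (Cadd a b))).
    rewrite <- Rcpow_add; replace (Cadd (Csub c a) (Csub c b)) with (Cadd c (Csub c (Cadd a b))) by ring.
    rewrite Rcpow_add; field; assumption. }
  unfold gauss_ratio, one_add_div_Cnat.
  rewrite (poch_gamma_seq c), (poch_gamma_seq (Csub c a)), (poch_gamma_seq (Csub c b)),
    (poch_gamma_seq (Csub c (Cadd a b))), E by assumption.
  pose proof (gamma_seq_neq0 c n Hc); pose proof (gamma_seq_neq0 _ n Ha).
  pose proof (gamma_seq_neq0 _ n Hb); pose proof (gamma_seq_neq0 _ n Hd).
  pose proof (add_Cnat_neq0 c n Hc); pose proof (add_Cnat_neq0 _ n Ha).
  pose proof (add_Cnat_neq0 _ n Hb); pose proof (add_Cnat_neq0 _ n Hd).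
  pose proof (Rcpow_neq0 (INR n) (Csub c a)); pose proof (Rcpow_neq0 (INR n) (Csub c b)).
  pose proof (Rcpow_neq0 (INR n) (Csub c (Cadd a b))); pose proof (Cnat_fact_neq0 n).
  pose proof (Cnat_neq0 n Hn).
  field; repeat split; auto; rewrite (Radd_comm Cx_ring); auto.
Qed.

Lemma gauss_ratio_cv (a b c : Cx) :
  notNonPosInt c -> notNonPosInt (Csub c a) -> notNonPosInt (Csub c b) ->
  notNonPosInt (Csub c (Cadd a b)) ->
  Ccv (gauss_ratio a b c)
      (Cdiv (Cmul (Gamma c) (Gamma (Csub c (Cadd a b)))) (Cmul (Gamma (Csub c a)) (Gamma (Csub c b)))).
Proof.
  intros Hc Ha Hb Hd.
  apply (Ccv_eventually_ext (fun n => Cmul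
     (Cdiv (Cmul (gamma_seq n c) (gamma_seq n (Csub c (Cadd a b))))
           (Cmul (gamma_seq n (Csub c a)) (gamma_seq n (Csub c b))))
     (Cdiv (Cmul (one_add_div_Cnat c n) (one_add_div_Cnat (Csub c (Cadd a b)) n))
           (Cmul (one_add_div_Cnat (Csub c a) n) (one_add_div_Cnat (Csub c b) n))))).
  { exists 1%nat; intros n Hn; symmetry; apply gauss_ratio_gamma_seq; assumption. }
  pose proof (Gamma_neq0 _ Ha); pose proof (Gamma_neq0 _ Hb).
  set (G := Cdiv (Cmul (Gamma c) (Gamma (Csub c (Cadd a b)))) (Cmul (Gamma (Csub c a)) (Gamma (Csub c b)))).
  replace G with (Cmul G (Cdiv (Cmul Cx1 Cx1) (Cmul Cx1 Cx1))) by (field; apply Cx1_neq0).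
  unfold G.
  apply Ccv_mul; apply Ccv_div; try apply Ccv_mul;
    solve [apply Cmul_neq0; auto; apply Cx1_neq0 | apply gamma_seq_cv; assumption
          | apply one_add_div_Cnat_cv].
Qed.

Lemma Cnorm_poch_add_Cnat_le (x : Cx) (n0 n m : nat) : 0 <= Re x + INR n0 -> (n0 <= n)%nat ->
  Cnorm (poch (Cadd x (Cnat n0)) m) <= Cnorm (poch (Cadd x (Cnat n)) m).
Proof.
  intros Hx Hn; induction m as [|m IH]; [apply Rle_refl|].
  rewrite !poch_S, !Cnorm_mul; apply Rmult_le_compat; try apply Cnorm_ge0; [exact IH|].
  replace (Cadd (Cadd x (Cnat n0)) (Cnat m)) with (Cadd x (Cnat (n0 + m))) by (rewrite Cnat_add; ring).
  replace (Cadd (Cadd x (Cnat n)) (Cnat m)) with (Cadd x (Cnat (n + m))) by (rewrite Cnat_add; ring).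
  apply Cnorm_add_Cnat_le; [rewrite plus_INR; pose proof (pos_INR m); lra | lia].
Qed.

Lemma Cnorm_F21_term_S_mul (a b d : Cx) (j : nat) : notNonPosInt d ->
  Cnorm (F21_term a b d (S j)) * Cnorm d =
  Cnorm (Cmul (poch a (S j)) (poch b (S j))) /
    (Cnorm (Cnat (Factorial.fact (S j))) * Cnorm (poch (Cadd d Cx1) j)).
Proof.
  intro Hd; pose proof (poch_neq0 d (S j) Hd) as P; rewrite poch_Sl in P.
  pose proof (Cnorm_gt0 _ (Cmul_neq0_l _ _ P)); pose proof (Cnorm_gt0 _ (Cmul_neq0_r _ _ P)).
  pose proof (Cnorm_gt0 _ (Cnat_fact_neq0 (S j))).
  unfold F21_term; rewrite Cnorm_div by (apply Cmul_neq0; [apply Cnat_fact_neq0 | apply poch_neq0, Hd]).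
  rewrite (poch_Sl d), !Cnorm_mul.
  field; lra.
Qed.

Lemma Cnorm_F21_term_S_mul_le (a b c : Cx) (n0 n j : nat) :
  notNonPosInt c -> 0 <= Re c + INR n0 -> (n0 <= n)%nat ->
  Cnorm (F21_term a b (Cadd c (Cnat n)) (S j)) * Cnorm (Cadd c (Cnat n)) <=
  Cnorm (F21_term a b (Cadd c (Cnat n0)) (S j)) * Cnorm (Cadd c (Cnat n0)).
Proof.
  intros Hc H Hn; rewrite !Cnorm_F21_term_S_mul by (apply notNonPosInt_add_Cnat, Hc).
  assert (Hmono := Cnorm_poch_add_Cnat_le c (S n0) (S n) j ltac:(rewrite S_INR; lra) ltac:(lia)).
  rewrite !Cnat_S in Hmono.
  replace (Cadd c (Cadd (Cnat n0) Cx1)) with (Cadd (Cadd c (Cnat n0)) Cx1) in Hmono by ring.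
  replace (Cadd c (Cadd (Cnat n) Cx1)) with (Cadd (Cadd c (Cnat n)) Cx1) in Hmono by ring.
  assert (0 < Cnorm (poch (Cadd (Cadd c (Cnat n0)) Cx1) j))
    by (apply Cnorm_gt0, poch_neq0, notNonPosInt_S, notNonPosInt_add_Cnat, Hc).
  pose proof (Cnorm_gt0 _ (Cnat_fact_neq0 (S j))).
  pose proof (Cnorm_ge0 (Cmul (poch a (S j)) (poch b (S j)))).
  unfold Rdiv; apply Rmult_le_compat_l; [assumption|].
  apply Rinv_le_contravar; [apply Rmult_lt_0_compat; assumption|].
  apply Rmult_le_compat_l; lra.
Qed.

Lemma Ccv_Csum_tail (g : nat -> Cx) (l : Cx) :
  Ccv (Csum g) l -> Ccv (Csum (fun j => g (S j))) (Csub l (g 0%nat)).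
Proof.
  intro H; apply (Ccv_ext (fun N => Csub (Csum g (S N)) (g 0%nat))).
  - intro N; rewrite Csum_Sl; ring.
  - apply Ccv_sub; [apply Ccv_S, H | apply Ccv_const].
Qed.

(* Shifting [c] to [c + n] multiplies every term after the first by [O(1/n)]. *)
Lemma F21_shift_cv1 (a b c : Cx) (Sv : nat -> Cx) : notNonPosInt c -> 0 < Re c - Re a - Re b ->
  (forall n, Ccv (Csum (F21_term a b (Cadd c (Cnat n)))) (Sv n)) -> Ccv Sv Cx1.
Proof.
  intros Hc Hs HS; destruct (INR_unbounded (- Re c)) as [n0 Hn0].
  assert (Hc0 : notNonPosInt (Cadd c (Cnat n0))) by (apply notNonPosInt_add_Cnat, Hc).
  destruct (F21_norm_bounded a b (Cadd c (Cnat n0)) Hc0) as [B0 HB0]; [cbn; pose proof (pos_INR n0); lra|].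
  set (K0 := Cnorm (Cadd c (Cnat n0))).
  assert (Bn : forall n N, (n0 <= n)%nat ->
     rsum (fun j => Cnorm (F21_term a b (Cadd c (Cnat n)) (S j))) N <= B0 * K0 / (Re c + INR n)).
  { intros n N Hn; apply le_INR in Hn as Hn'.
    pose proof (Re_le_Cnorm (Cadd c (Cnat n))) as Hcn; cbn [Re Cadd Cnat RtoC] in Hcn.
    apply Rmult_le_reg_r with (Re c + INR n); [lra|].
    replace (B0 * K0 / (Re c + INR n) * (Re c + INR n)) with (B0 * K0) by (field; lra).
    apply Rle_trans with
      (rsum (fun j => Cnorm (F21_term a b (Cadd c (Cnat n)) (S j))) N * Cnorm (Cadd c (Cnat n))).
    { apply Rmult_le_compat_l; [apply rsum_ge0; intro; apply Cnorm_ge0 | exact Hcn]. }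
    rewrite <- rsum_mulr; eapply Rle_trans.
    { apply rsum_le; intro j; apply (Cnorm_F21_term_S_mul_le a b c n0 n j Hc); [lra | exact Hn]. }
    rewrite rsum_mulr; apply Rmult_le_compat_r; [apply Cnorm_ge0|].
    eapply Rle_trans; [|apply (HB0 (S N))]; rewrite rsum_Sl.
    pose proof (Cnorm_ge0 (F21_term a b (Cadd c (Cnat n0)) 0)); lra. }
  assert (Ev : eventually (fun n => Rabs (Re (Csub (Sv n) Cx1)) <= B0 * K0 / (Re c + INR n) /\
                                    Rabs (Im (Csub (Sv n) Cx1)) <= B0 * K0 / (Re c + INR n))).
  { exists n0; intros n Hn; apply (Csum_cv_Re_Im_le (fun j => F21_term a b (Cadd c (Cnat n)) (S j))).
    - rewrite <- (F21_term_0 a b (Cadd c (Cnat n))); apply Ccv_Csum_tail, HS.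
    - intro N; apply Bn; exact Hn. }
  assert (Hd : Ccv (fun n => Csub (Sv n) Cx1) Cx0).
  { split; apply (Un_cv_squeeze0 _ _ (Un_cv_div_add_INR (B0 * K0) (Re c)));
      revert Ev; apply filter_imp; intros n Hn; apply Hn. }
  pose proof (Ccv_add _ _ _ _ (Ccv_const Cx1) Hd) as H.
  replace (Cadd Cx1 Cx0) with Cx1 in H by ring.
  revert H; apply Ccv_ext; intro n; ring.
Qed.

Lemma F21_sum_shift (a b c : Cx) (Sv : nat -> Cx) : notNonPosInt c -> 0 < Re c - Re a - Re b ->
  (forall n, Ccv (Csum (F21_term a b (Cadd c (Cnat n)))) (Sv n)) ->
  forall n, Sv 0%nat = Cmul (gauss_ratio a b c n) (Sv n).
Proof.
  intros Hc Hs HS n.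
  assert (Hd : notNonPosInt (Csub c (Cadd a b))) by (apply notNonPosInt_Re_pos; cbn; lra).
  assert (It : Cmul (Cmul (poch c n) (poch (Csub c (Cadd a b)) n)) (Sv 0%nat) =
               Cmul (Cmul (poch (Csub c a) n) (poch (Csub c b) n)) (Sv n)).
  { induction n as [|n IH]; [simpl; ring|].
    set (cn := Cadd c (Cnat n)).
    assert (HS1 : Ccv (Csum (F21_term a b (Cadd cn Cx1))) (Sv (S n)))
      by (replace (Cadd cn Cx1) with (Cadd c (Cnat (S n))) by (unfold cn; rewrite Cnat_S; ring); apply HS).
    assert (E := F21_contiguous a b cn (Sv n) (Sv (S n)) (notNonPosInt_add_Cnat c n Hc)
                   ltac:(unfold cn; cbn; pose proof (pos_INR n); lra) (HS n) HS1).
    rewrite !poch_S.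
    transitivity (Cmul (Cmul (Cmul (poch c n) (poch (Csub c (Cadd a b)) n)) (Sv 0%nat))
                       (Cmul cn (Csub cn (Cadd a b)))); [unfold cn; ring|].
    rewrite IH.
    transitivity (Cmul (Cmul (poch (Csub c a) n) (poch (Csub c b) n))
                       (Cmul (Cmul cn (Csub cn (Cadd a b))) (Sv n))); [ring|].
    rewrite E; unfold cn; ring. }
  pose proof (poch_neq0 c n Hc); pose proof (poch_neq0 _ n Hd).
  transitivity (Cdiv (Cmul (Cmul (poch c n) (poch (Csub c (Cadd a b)) n)) (Sv 0%nat))
                     (Cmul (poch c n) (poch (Csub c (Cadd a b)) n))); [field; split; assumption|].
  rewrite It; unfold gauss_ratio; field; split; assumption.
Qed.

Theorem gauss_summation (a b c : Cx) :
  notNonPosInt c -> notNonPosInt (Csub c a) -> notNonPosInt (Csub c b) -> 0 < Re c - Re a - Re b ->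
  Ccv (Csum (F21_term a b c))
      (Cdiv (Cmul (Gamma c) (Gamma (Csub c (Cadd a b)))) (Cmul (Gamma (Csub c a)) (Gamma (Csub c b)))).
Proof.
  intros Hc Ha Hb Hs.
  assert (Hd : notNonPosInt (Csub c (Cadd a b))) by (apply notNonPosInt_Re_pos; cbn; lra).
  set (Sv := fun n => Clim (Csum (F21_term a b (Cadd c (Cnat n))))).
  assert (HS : forall n, Ccv (Csum (F21_term a b (Cadd c (Cnat n)))) (Sv n)).
  { intro n; destruct (F21_cv a b (Cadd c (Cnat n))) as [S HS];
      [apply notNonPosInt_add_Cnat, Hc | cbn; pose proof (pos_INR n); lra |].
    unfold Sv; rewrite (Clim_eq _ _ HS); exact HS. }
  assert (L := Ccv_mul _ _ _ _ (gauss_ratio_cv a b c Hc Ha Hb Hd) (F21_shift_cv1 a b c Sv Hc Hs HS)).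
  assert (L0 : Ccv (fun n => Cmul (gauss_ratio a b c n) (Sv n)) (Sv 0%nat))
    by (apply Ccv_eventually_const, filter_forall; intro n; symmetry; apply F21_sum_shift; assumption).
  replace (Cdiv (Cmul (Gamma c) (Gamma (Csub c (Cadd a b)))) (Cmul (Gamma (Csub c a)) (Gamma (Csub c b))))
    with (Sv 0%nat) by (rewrite <- (Ccv_unique _ _ _ L L0); ring).
  specialize (HS 0%nat); replace (Cadd c (Cnat 0)) with c in HS by (apply Cx_ext; simpl; ring).
  exact HS.
Qed.

(** * The [3F2] with lower parameter [c] and upper parameter [c + n] *)

Lemma F32_opp_Cnat (k : nat) (a b c f : Cx) : F32 (Copp (Cnat k)) a b c f = F32_fin k a b c f.
Proof.
  apply Clim_eq, Ccv_eventually_const; exists (S k); intros N HN.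
  apply F32_partial_opp_Cnat, HN.
Qed.

Lemma poch_opp_add_Cnat (f : Cx) (k : nat) :
  poch (Copp (Cadd f (Cnat k))) (S k) = Cmul (Cpown (Copp Cx1) (S k)) (Cmul f (poch (Cadd f Cx1) k)).
Proof.
  induction k as [|k IH]; [simpl; rewrite Cnat_0; ring|].
  rewrite poch_Sl.
  replace (Cadd (Copp (Cadd f (Cnat (S k)))) Cx1) with (Copp (Cadd f (Cnat k))) by (rewrite Cnat_S; ring).
  rewrite IH, (poch_S (Cadd f Cx1) k), Cnat_S; simpl Cpown; ring.
Qed.

Lemma F32_term_c_shift_0 (a b c D : Cx) (m : nat) : notNonPosInt c -> notNonPosInt D ->
  F32_term a b (Cadd c (Cnat 0)) D c m = F21_term a b D m.
Proof.
  intros Hc HD; pose proof (poch_neq0 c m Hc); pose proof (poch_neq0 D m HD).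
  pose proof (Cnat_fact_neq0 m); unfold F32_term, F21_term.
  rewrite Cnat_0; replace (Cadd c Cx0) with c by ring; field; repeat split; auto.
Qed.

Lemma F32_term_c_shift_S (a b c D : Cx) (n m : nat) : notNonPosInt c -> notNonPosInt D ->
  F32_term a b (Cadd c (Cnat (S n))) D c (S m) =
  Cadd (F32_term a b (Cadd c (Cnat n)) D c (S m))
       (Cmul (Cdiv (Cmul a b) (Cmul D c))
             (F32_term (Cadd a Cx1) (Cadd b Cx1) (Cadd (Cadd c Cx1) (Cnat n)) (Cadd D Cx1) (Cadd c Cx1) m)).
Proof.
  intros Hc HD.
  pose proof (poch_neq0 c (S m) Hc) as Pc; pose proof (poch_neq0 D (S m) HD) as PD.
  poch_facts Pc; poch_facts PD; pose proof (Cnat_fact_neq0 m); pose proof (Cnat_neq0 (S m) (Nat.lt_0_succ m)).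
  unfold F32_term.
  replace (Cadd c (Cnat (S n))) with (Cadd (Cadd c (Cnat n)) Cx1) by (rewrite Cnat_S; ring).
  replace (Cadd (Cadd c Cx1) (Cnat n)) with (Cadd (Cadd c (Cnat n)) Cx1) by ring.
  rewrite (poch_S (Cadd (Cadd c (Cnat n)) Cx1)), !(poch_Sl _ m), Cnat_fact_S; rewrite Cnat_S in *.
  field; repeat split; auto.
Qed.

Definition gauss_prefactor (a b D : Cx) : Cx :=
  Cdiv (Cmul (Gamma D) (Gamma (Csub D (Cadd a b)))) (Cmul (Gamma (Csub D a)) (Gamma (Csub D b))).

(* Both sides satisfy the same recurrence in [n]: [F32_term_c_shift_S] on the left, and
   [F32_fin_S] together with [Gamma_S] on the right. *)
Lemma gauss_prefactor_F32_fin_S (a b c D : Cx) (n : nat) :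
  notNonPosInt c -> notNonPosInt D -> notNonPosInt (Csub D a) -> notNonPosInt (Csub D b) ->
  INR (S n) < Re D - Re a - Re b ->
  Cmul (gauss_prefactor a b D) (F32_fin (S n) a b c (Csub (Cadd (Cadd a b) Cx1) D)) =
  Cadd (Cmul (gauss_prefactor a b D) (F32_fin n a b c (Csub (Cadd (Cadd a b) Cx1) D)))
       (Cmul (Cdiv (Cmul a b) (Cmul D c))
             (Cmul (gauss_prefactor (Cadd a Cx1) (Cadd b Cx1) (Cadd D Cx1))
                   (F32_fin n (Cadd a Cx1) (Cadd b Cx1) (Cadd c Cx1)
                            (Csub (Cadd (Cadd (Cadd a Cx1) (Cadd b Cx1)) Cx1) (Cadd D Cx1))))).
Proof.
  intros Hc HD Ha Hb Hn; rewrite S_INR in Hn.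
  set (f := Csub (Cadd (Cadd a b) Cx1) D); set (X := Csub (Csub (Csub D Cx1) a) b).
  assert (HX : notNonPosInt X) by (apply notNonPosInt_Re_pos; unfold X; cbn; pose proof (pos_INR n); lra).
  assert (Hf : Re f < - INR n) by (unfold f; cbn; lra).
  rewrite F32_fin_S by (apply poch_neq0, Hc || apply poch_neq0_Re, Hf).
  replace (Csub (Cadd (Cadd (Cadd a Cx1) (Cadd b Cx1)) Cx1) (Cadd D Cx1)) with (Cadd f Cx1)
    by (unfold f; ring).
  unfold gauss_prefactor.
  replace (Csub (Cadd D Cx1) (Cadd a Cx1)) with (Csub D a) by ring.
  replace (Csub (Cadd D Cx1) (Cadd b Cx1)) with (Csub D b) by ring.
  replace (Csub (Cadd D Cx1) (Cadd (Cadd a Cx1) (Cadd b Cx1))) with X by (unfold X; ring).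
  replace (Csub D (Cadd a b)) with (Cadd X Cx1) by (unfold X; ring).
  rewrite (Gamma_S D HD), (Gamma_S X HX).
  pose proof (Gamma_neq0 _ Ha); pose proof (Gamma_neq0 _ Hb).
  pose proof (notNonPosInt_neq0 _ Hc); pose proof (notNonPosInt_neq0 _ HD).
  replace f with (Copp X) by (unfold f, X; ring).
  assert (Copp X <> Cx0)
    by (replace (Copp X) with f by (unfold f, X; ring); intro E; rewrite E in Hf; cbn in Hf;
        pose proof (pos_INR n); lra).
  field; repeat split; auto.
Qed.

Theorem F32_c_shift (n : nat) (a b c D : Cx) :
  notNonPosInt c -> notNonPosInt D -> notNonPosInt (Csub D a) -> notNonPosInt (Csub D b) ->
  INR n < Re D - Re a - Re b ->
  Ccv (F32_partial a b (Cadd c (Cnat n)) D c)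
      (Cmul (gauss_prefactor a b D) (F32_fin n a b c (Csub (Cadd (Cadd a b) Cx1) D))).
Proof.
  revert a b c D; induction n as [|n IH]; intros a b c D Hc HD Ha Hb Hn.
  - rewrite F32_fin_0; replace (Cmul (gauss_prefactor a b D) Cx1) with (gauss_prefactor a b D) by ring.
    apply (Ccv_ext (Csum (F21_term a b D))).
    { intro N; apply Csum_ext; intros m _; symmetry; apply F32_term_c_shift_0; assumption. }
    apply gauss_summation; try assumption; simpl in Hn; lra.
  - rewrite gauss_prefactor_F32_fin_S by assumption; rewrite S_INR in Hn.
    set (kappa := Cdiv (Cmul a b) (Cmul D c)).
    assert (Step : forall N, F32_partial a b (Cadd c (Cnat (S n))) D c (S N) =
      Cadd (F32_partial a b (Cadd c (Cnat n)) D c (S N))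
           (Cmul kappa (F32_partial (Cadd a Cx1) (Cadd b Cx1) (Cadd (Cadd c Cx1) (Cnat n))
                                    (Cadd D Cx1) (Cadd c Cx1) N))).
    { intro N; unfold F32_partial; rewrite !Csum_Sl, !F32_term_0, <- Csum_mull.
      rewrite (Csum_ext _ _ _ (fun m _ => F32_term_c_shift_S a b c D n m Hc HD)), Csum_add.
      fold kappa; ring. }
    apply Ccv_of_S; apply (Ccv_ext _ _ _ (fun N => eq_sym (Step N))).
    apply Ccv_add; [apply Ccv_S, IH; assumption || lra|].
    apply Ccv_mul; [apply Ccv_const|]; apply IH;
      [apply notNonPosInt_S, Hc | apply notNonPosInt_S, HD | | | cbn; lra];
      [replace (Csub (Cadd D Cx1) (Cadd a Cx1)) with (Csub D a) by ring
      | replace (Csub (Cadd D Cx1) (Cadd b Cx1)) with (Csub D b) by ring]; assumption.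
Qed.

(* For [k = 0] the value of the divergent [F32 1 ...] is irrelevant: it is multiplied by [0]. *)
Lemma F32_one_sub_Cnat_scaled (k : nat) (X Y a b c f : Cx) :
  Cmul (Cdiv (Cmul X (Cnat k)) Y) (F32 (Csub Cx1 (Cnat k)) a b c f) =
  Cmul (Cdiv (Cmul X (Cnat k)) Y) (F32_partial (Csub Cx1 (Cnat k)) a b c f k).
Proof.
  destruct k as [|k]; [rewrite Cnat_0; unfold Cdiv; ring|].
  replace (Csub Cx1 (Cnat (S k))) with (Copp (Cnat k)) by (rewrite Cnat_S; ring).
  rewrite F32_opp_Cnat, F32_partial_opp_Cnat; reflexivity.
Qed.

Lemma gauss_prefactor_F32_fin_eq (k : nat) (a b c d : Cx) :
  notNonPosInt c -> notNonPosInt (Cadd d Cx1) -> notNonPosInt (Cadd (Csub (Cadd a b) d) Cx1) ->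
  notNonPosInt (Cadd (Csub d a) Cx1) -> notNonPosInt (Cadd (Csub d b) Cx1) ->
  0 < Re (Csub (Csub (Csub d a) b) (Cnat k)) ->
  let e := Cadd (Csub (Cadd a b) d) Cx1 in
  Cmul (gauss_prefactor a b (Cadd d Cx1)) (F32_fin (S k) a b c (Csub (Cadd (Cadd a b) Cx1) (Cadd d Cx1))) =
    (Cmul
      (Cdiv
        (Cmul (Cmul (Cmul (Cpown (Copp Cx1) k) (Gamma (Cadd d Cx1)))
                    (Gamma (Csub (Csub (Csub d a) b) (Cnat k))))
              (poch e k))
        (Cmul (Cmul c (Gamma (Cadd (Csub d a) Cx1))) (Gamma (Cadd (Csub d b) Cx1))))
      (Cadd
        (Cmul (Cadd (Cmul a (Csub b c)) (Cmul c (Csub d b)))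
              (F32 (Copp (Cnat k)) a b (Cadd c Cx1) e))
        (Cmul
          (Cdiv (Cmul (Cmul (Cmul a b) (Csub c d)) (Cnat k))
                (Cmul (Cadd c Cx1) e))
          (F32 (Csub Cx1 (Cnat k)) (Cadd a Cx1) (Cadd b Cx1)
               (Cadd c (RtoC 2)) (Cadd e Cx1))))).
Proof.
  intros Hc Hd He Ha Hb Hre e; cbn in Hre.
  set (f := Csub (Cadd (Cadd a b) Cx1) (Cadd d Cx1)).
  set (z := Csub (Csub (Csub d a) b) (Cnat k)).
  assert (Hz : notNonPosInt z) by (apply notNonPosInt_Re_pos; exact Hre).
  rewrite F32_fin_contiguous
    by (apply poch_neq0, Hc || apply poch_neq0_Re; unfold f; cbn; lra).
  rewrite F32_opp_Cnat, F32_one_sub_Cnat_scaled; unfold gauss_prefactor.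
  replace (Csub (Cadd d Cx1) (Cadd a b)) with (Cadd z (Cnat (S k))) by (unfold z; rewrite Cnat_S; ring).
  rewrite (Gamma_add_Cnat z (S k) Hz).
  replace (poch z (S k)) with (Cmul (Cpown (Copp Cx1) (S k)) (Cmul f (poch (Cadd f Cx1) k)))
    by (rewrite <- poch_opp_add_Cnat; f_equal; unfold z, f; ring).
  replace (Cadd f Cx1) with e by (unfold e, f; ring).
  replace (Cadd f (RtoC 2)) with (Cadd e Cx1) by (unfold e, f; rewrite RtoC_2; ring).
  replace (Csub (Cadd d Cx1) a) with (Cadd (Csub d a) Cx1) by ring.
  replace (Csub (Cadd d Cx1) b) with (Cadd (Csub d b) Cx1) by ring.
  pose proof (Gamma_neq0 _ Ha); pose proof (Gamma_neq0 _ Hb).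
  pose proof (notNonPosInt_neq0 _ Hc); pose proof (notNonPosInt_neq0 _ (notNonPosInt_S _ Hc)).
  pose proof (notNonPosInt_neq0 _ He).
  assert (f <> Cx0)
    by (intro E; apply (f_equal Re) in E; unfold f in E; cbn in E; pose proof (pos_INR k); lra).
  simpl Cpown; unfold e, f in *; field; repeat split; auto.
Qed.

Theorem mainTheorem7 (k : nat) (a b c d : Cx)
  (hc : notNonPosInt c)
  (hd : notNonPosInt (Cadd d Cx1))
  (habd : notNonPosInt (Cadd (Csub (Cadd a b) d) Cx1))
  (hda : notNonPosInt (Cadd (Csub d a) Cx1))
  (hdb : notNonPosInt (Cadd (Csub d b) Cx1))
  (hre : 0 < Re (Csub (Csub (Csub d a) b) (Cnat k))) :
  let e := Cadd (Csub (Cadd a b) d) Cx1 in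
  Ccv (F32_partial a b (Cadd (Cadd c (Cnat k)) Cx1) (Cadd d Cx1) c)
    (Cmul
      (Cdiv
        (Cmul (Cmul (Cmul (Cpown (Copp Cx1) k) (Gamma (Cadd d Cx1)))
                    (Gamma (Csub (Csub (Csub d a) b) (Cnat k))))
              (poch e k))
        (Cmul (Cmul c (Gamma (Cadd (Csub d a) Cx1))) (Gamma (Cadd (Csub d b) Cx1))))
      (Cadd
        (Cmul (Cadd (Cmul a (Csub b c)) (Cmul c (Csub d b)))
              (F32 (Copp (Cnat k)) a b (Cadd c Cx1) e))
        (Cmul
          (Cdiv (Cmul (Cmul (Cmul a b) (Csub c d)) (Cnat k))
                (Cmul (Cadd c Cx1) e))
          (F32 (Csub Cx1 (Cnat k)) (Cadd a Cx1) (Cadd b Cx1)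
               (Cadd c (RtoC 2)) (Cadd e Cx1))))).
Proof.
  intro e; rewrite <- gauss_prefactor_F32_fin_eq by assumption.
  replace (Cadd (Cadd c (Cnat k)) Cx1) with (Cadd c (Cnat (S k))) by (rewrite Cnat_S; ring).
  apply F32_c_shift; try assumption.
  - replace (Csub (Cadd d Cx1) a) with (Cadd (Csub d a) Cx1) by ring; exact hda.
  - replace (Csub (Cadd d Cx1) b) with (Cadd (Csub d b) Cx1) by ring; exact hdb.
  - cbn in hre; rewrite S_INR; cbn; lra.
Qed.
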